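(* Let $x^*\in\Delta$ be a strict Nash equilibrium. Then $x^*$ is an attracting mutation limit point: $\{x^*\}$ is a mutation limit, and for every $c\in\operatorname{int}\Delta$ and every sequence of mutation equilibria $(x_n)$ for $c$ (with rates $M_n>0$, $M_n\to 0$) converging to $x^*$, there is $m>0$ such that $x_n$ is an asymptotically stable equilibrium of $\dot x=\phi^{M_n}(x)$ whenever $M_n<m$.
   Context: Let $I=\{1,\dots,N\}$ be a finite set of populations; population $i$ has the finite type set $S_i=\{1,\dots,n_i\}$. Let $S=\{(i,h): i\in I, h\in S_i\}$, $\Delta_i=\{x_i\in\mathbb R^{n_i}_{\ge 0}:\sum_{h\le n_i}x_{ih}=1\}$, $\Delta=\prod_{i\in I}\Delta_i\subset\mathbb R^S$, and $\operatorname{int}\Delta=\{x\in\Delta: x_{ih}>0 \text{ for all }(i,h)\in S\}$. For each $(i,h)\in S$ let $f_{ih}\in C^1(U,\mathbb R)$ for some open $U\supset\Delta$, with $\partial f_{ih}/\partial x_{ik}=0$ for all $i\in I$, $h,k\in S_i$. Put $\bar f_i(x)=\sum_{h\le n_i}x_{ih}f_{ih}(x)$, $g_{ih}=f_{ih}-\bar f_i$, and for $M\ge0$, $c\in\operatorname{int}\Delta$, $\phi^M_{ih}(x)=x_{ih}g_{ih}(x)+M(c_{ih}-x_{ih})$ (replicator–mutator dynamics; stability refers to its flow on $\Delta$). A strict Nash equilibrium is $x^*\in\Delta$ such that for all $i\in I$ and all $z_i\in\Delta_i\setminus\{x_i^*\}$, $\bar f_i(x^* )>\bar f_i(x^*_{-i},z_i)$,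 where $(x^*_{-i},z_i)$ is $x^*$ with its $i$-th component replaced by $z_i$. A mutation equilibrium for $M$ (w.r.t. $c$) is $x\in\Delta$ with $\phi^M(x)=0$; a sequence of mutation equilibria for $c$ is $(x_n)\subset\Delta$ with $M_n>0$, $M_n\to0$, $\phi^{M_n}(x_n)=0$. A mutation limit is a nonempty connected compact set $X\subset\Delta$ such that for every $c\in\operatorname{int}\Delta$ there is a sequence of mutation equilibria for $c$ converging to an element of $X$, and no proper subset of $X$ is a connected compact set with this property. A mutation limit $X$ is attracting if for every $c\in\operatorname{int}\Delta$ and every sequence of mutation equilibria for $c$ converging to an element of $X$, there is $m>0$ such that all terms with rate $M_n<m$ are asymptotically stable. *)

From Stdlib Require Import Reals Lra Lia Arith List.
Open Scope R_scope.

(* Points of R^S are represented as functions x : nat -> nat -> R, where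
   x i h is the coordinate (i,h); populations are indexed 0 <= i < N and
   types of population i by 0 <= h < n i. Coordinates outside S are junk;
   all distances only look at coordinates in S, and membership in Delta
   requires junk coordinates to be 0 (so points of Delta are canonical). *)
Definition pt := nat -> nat -> R.

Fixpoint rsum (k : nat) (F : nat -> R) : R :=
  match k with O => 0 | S k' => rsum k' F + F k' end.

Definition inS (N : nat) (n : nat -> nat) (i h : nat) : Prop :=
  (i < N)%nat /\ (h < n i)%nat.

Definition dist (N : nat) (n : nat -> nat) (x y : pt) : R :=
  rsum N (fun i => rsum (n i) (fun h => Rabs (x i h - y i h))).

Definition in_Delta_i (n : nat -> nat) (i : nat) (z : nat -> R) : Prop :=
  (forall h, (h < n i)%nat -> 0 <= z h) /\
  (forall h, (n i <= h)%nat -> z h = 0) /\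
  rsum (n i) z = 1.

Definition in_Delta (N : nat) (n : nat -> nat) (x : pt) : Prop :=
  (forall i, (i < N)%nat -> in_Delta_i n i (x i)) /\
  (forall i h, (N <= i)%nat -> x i h = 0).

Definition in_int_Delta (N : nat) (n : nat -> nat) (x : pt) : Prop :=
  in_Delta N n x /\ (forall i h, inS N n i h -> 0 < x i h).

Definition is_open (N : nat) (n : nat -> nat) (U : pt -> Prop) : Prop :=
  forall x, U x -> exists eps, 0 < eps /\ forall y, dist N n y x < eps -> U y.

Definition is_compact (N : nat) (n : nat -> nat) (X : pt -> Prop) : Prop :=
  forall F : (pt -> Prop) -> Prop,
    (forall U, F U -> is_open N n U) ->
    (forall x, X x -> exists U, F U /\ U x) ->
    exists l : list (pt -> Prop),
      (forall U, In U l -> F U) /\ (forall x, X x -> exists U, In U l /\ U x).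

Definition is_connected (N : nat) (n : nat -> nat) (X : pt -> Prop) : Prop :=
  ~ exists U V : pt -> Prop,
      is_open N n U /\ is_open N n V /\
      (forall x, X x -> U x \/ V x) /\
      (exists x, X x /\ U x) /\ (exists x, X x /\ V x) /\
      (forall x, X x -> U x -> V x -> False).

(* f is C^1 on the open set U (Frechet differentiable with continuous
   derivative Df), with Df x j k the partial derivative w.r.t. x_{jk}. *)
Definition C1_on (N : nat) (n : nat -> nat) (U : pt -> Prop) (g : pt -> R)
    (Dg : pt -> nat -> nat -> R) : Prop :=
  (forall x, U x -> forall eps, 0 < eps -> exists d, 0 < d /\
     forall y, dist N n y x < d ->
       Rabs (g y - g x - rsum N (fun j => rsum (n j)
               (fun k => Dg x j k * (y j k - x j k))))
       <= eps * dist N n y x) /\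
  (forall x, U x -> forall j k, inS N n j k -> forall eps, 0 < eps ->
     exists d, 0 < d /\ forall y, U y -> dist N n y x < d ->
       Rabs (Dg y j k - Dg x j k) < eps).

(* Standing assumptions on the fitness functions f_{ih}: C^1 on some open
   U containing Delta, with df_{ih}/dx_{ik} = 0. *)
Definition fitness_hyp (N : nat) (n : nat -> nat) (f : nat -> nat -> pt -> R)
  : Prop :=
  exists U : pt -> Prop,
    is_open N n U /\ (forall x, in_Delta N n x -> U x) /\
    forall i h, inS N n i h ->
      exists Df : pt -> nat -> nat -> R,
        C1_on N n U (f i h) Df /\
        (forall x k, U x -> (k < n i)%nat -> Df x i k = 0).

Definition fbar (n : nat -> nat) (f : nat -> nat -> pt -> R) (i : nat) (x : pt)
  : R := rsum (n i) (fun h => x i h * f i h x).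

Definition g_fit (n : nat -> nat) (f : nat -> nat -> pt -> R) (i h : nat)
  (x : pt) : R := f i h x - fbar n f i x.

Definition phi (n : nat -> nat) (f : nat -> nat -> pt -> R) (M : R) (c : pt)
  (x : pt) : pt :=
  fun i h => x i h * g_fit n f i h x + M * (c i h - x i h).

Definition replace_i (x : pt) (i : nat) (z : nat -> R) : pt :=
  fun j => if Nat.eqb j i then z else x j.

Definition strict_nash (N : nat) (n : nat -> nat) (f : nat -> nat -> pt -> R)
  (xs : pt) : Prop :=
  in_Delta N n xs /\
  forall i, (i < N)%nat -> forall z, in_Delta_i n i z -> z <> xs i ->
    fbar n f i xs > fbar n f i (replace_i xs i z).

Definition seq_cv (N : nat) (n : nat -> nat) (x : nat -> pt) (y : pt) : Prop :=
  forall eps, 0 < eps -> exists K, forall k, (K <= k)%nat ->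
    dist N n (x k) y < eps.

Definition mut_eq_seq (N : nat) (n : nat -> nat) (f : nat -> nat -> pt -> R)
  (c : pt) (M : nat -> R) (x : nat -> pt) : Prop :=
  (forall k, 0 < M k) /\ Un_cv M 0 /\
  (forall k, in_Delta N n (x k)) /\
  (forall k i h, inS N n i h -> phi n f (M k) c (x k) i h = 0).

Definition has_mut_property (N : nat) (n : nat -> nat)
  (f : nat -> nat -> pt -> R) (X : pt -> Prop) : Prop :=
  forall c, in_int_Delta N n c ->
    exists (M : nat -> R) (x : nat -> pt) (y : pt),
      mut_eq_seq N n f c M x /\ X y /\ seq_cv N n x y.

Definition mutation_limit (N : nat) (n : nat -> nat)
  (f : nat -> nat -> pt -> R) (X : pt -> Prop) : Prop :=
  (exists x, X x) /\ (forall x, X x -> in_Delta N n x) /\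
  is_connected N n X /\ is_compact N n X /\
  has_mut_property N n f X /\
  forall Y : pt -> Prop,
    (forall x, Y x -> X x) -> (exists x, X x /\ ~ Y x) ->
    is_connected N n Y -> is_compact N n Y ->
    ~ has_mut_property N n f Y.

Definition solution_in_Delta (N : nat) (n : nat -> nat) (F : pt -> pt)
  (z : R -> pt) : Prop :=
  (forall t, 0 <= t -> in_Delta N n (z t)) /\
  (forall t, 0 < t -> forall i h, inS N n i h ->
     derivable_pt_lim (fun s => z s i h) t (F (z t) i h)) /\
  (forall eps, 0 < eps -> exists d, 0 < d /\
     forall t, 0 <= t < d -> dist N n (z t) (z 0) < eps).

Definition asympt_stable (N : nat) (n : nat -> nat) (F : pt -> pt) (e : pt)
  : Prop :=
  (forall eps, 0 < eps -> exists d, 0 < d /\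
     forall z, solution_in_Delta N n F z -> dist N n (z 0) e < d ->
       forall t, 0 <= t -> dist N n (z t) e < eps) /\
  (exists eta, 0 < eta /\
     forall z, solution_in_Delta N n F z -> dist N n (z 0) e < eta ->
       forall eps, 0 < eps -> exists T, forall t, T <= t ->
         dist N n (z t) e < eps).

Definition attracting (N : nat) (n : nat -> nat) (f : nat -> nat -> pt -> R)
  (X : pt -> Prop) : Prop :=
  forall c, in_int_Delta N n c ->
    forall (M : nat -> R) (x : nat -> pt),
      mut_eq_seq N n f c M x ->
      (exists y, X y /\ seq_cv N n x y) ->
      exists m, 0 < m /\ forall k, M k < m ->
        asympt_stable N n (phi n f (M k) c) (x k).

From Stdlib Require Import Reals Lra Lia FunctionalExtensionality Classical IndefiniteDescription.
Open Scope R_scope.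

(** 1. [xs] is pure: it is the vertex [e] of a selection [b] of one type per
       population, and every non-selected type does strictly worse there.  By
       continuity (the fitnesses are C^1, hence locally Lipschitz), on a ball of
       radius [r] around [e] the relative fitness [g_fit] of every non-selected
       type is at most [- kap], and [g_fit] is [L]-Lipschitz
       ([strict_nash_estimates]).
    2. Existence.  For a non-selected type, [phi^M x = 0] reads
       [x = M c / (M - g(x))].  For small [M] the map solving these equations
       (the selected type taking the remaining mass) is a contraction of a closed
       ball of radius [O(M)] around [e]; its fixed point is a mutation equilibrium
       ([mutation_equilibria_near_vertex]).  Rates [M0 / (k + 1)] thus give, for
       every interior [c], mutation equilibria converging to [e]; as the empty set
       never has this property, [{e}] is a mutation limit.
    3. Stability.  For a mutation equilibrium [x] close enough to [e], the sum
       over non-selected types of [(w - x)^2] is a strict Lyapunov function on a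
       neighbourhood of [x]; a scalar comparison principle for differential
       inequalities along solutions yields asymptotic stability
       ([rest_point_asympt_stable]).  Mutation equilibria converging to [e] are
       eventually close enough, which is the attracting property. *)

Lemma rsum_ext m F G : (forall k, (k < m)%nat -> F k = G k) -> rsum m F = rsum m G.
Proof.
  induction m as [|m IH]; simpl; intros H; auto.
  rewrite IH by (intros; apply H; lia). rewrite H by lia. reflexivity.
Qed.

Lemma rsum_plus m F G : rsum m (fun k => F k + G k) = rsum m F + rsum m G.
Proof. induction m; simpl; [lra | rewrite IHm; lra]. Qed.

Lemma rsum_minus m F G : rsum m (fun k => F k - G k) = rsum m F - rsum m G.
Proof. induction m; simpl; [lra | rewrite IHm; lra]. Qed.

Lemma rsum_scal m a F : rsum m (fun k => a * F k) = a * rsum m F.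
Proof. induction m; simpl; [lra | rewrite IHm; lra]. Qed.

Lemma rsum_const m a : rsum m (fun _ => a) = INR m * a.
Proof. induction m; simpl rsum; [simpl; lra | rewrite IHm, S_INR; lra]. Qed.

Lemma rsum_le m F G : (forall k, (k < m)%nat -> F k <= G k) -> rsum m F <= rsum m G.
Proof.
  induction m as [|m IH]; simpl; intros H; [lra|].
  assert (F m <= G m) by (apply H; lia).
  assert (rsum m F <= rsum m G) by (apply IH; intros; apply H; lia). lra.
Qed.

Lemma rsum_nonneg m F : (forall k, (k < m)%nat -> 0 <= F k) -> 0 <= rsum m F.
Proof.
  intros H. replace 0 with (rsum m (fun _ => 0)) by (rewrite rsum_const; ring).
  apply rsum_le; auto.
Qed.

Lemma rsum_abs m F : Rabs (rsum m F) <= rsum m (fun k => Rabs (F k)).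
Proof.
  induction m; simpl; [rewrite Rabs_R0; lra|].
  eapply Rle_trans; [apply Rabs_triang | lra].
Qed.

Lemma rsum_term_le m F k : (forall k, (k < m)%nat -> 0 <= F k) -> (k < m)%nat -> F k <= rsum m F.
Proof.
  induction m as [|m IH]; intros H Hk; [lia|simpl].
  destruct (Nat.eq_dec k m) as [->|Hne].
  - assert (0 <= rsum m F) by (apply rsum_nonneg; intros; apply H; lia). lra.
  - assert (F k <= rsum m F) by (apply IH; [intros; apply H|]; lia).
    assert (0 <= F m) by (apply H; lia). lra.
Qed.

Lemma rsum_split m F b : (b < m)%nat ->
  rsum m F = F b + rsum m (fun k => if Nat.eqb k b then 0 else F k).
Proof.
  induction m as [|m IH]; intros Hb; [lia|simpl].
  destruct (Nat.eq_dec b m) as [->|Hne].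
  - rewrite Nat.eqb_refl.
    rewrite (rsum_ext m (fun k => if Nat.eqb k m then 0 else F k) F); [lra|].
    intros k Hk. destruct (Nat.eqb_spec k m); [lia|auto].
  - rewrite IH by lia. destruct (Nat.eqb_spec m b); [lia|lra].
Qed.

Lemma rsum_delta m b a : (b < m)%nat -> rsum m (fun k => if Nat.eqb k b then a else 0) = a.
Proof.
  intros Hb. rewrite (rsum_split _ _ b Hb), Nat.eqb_refl.
  rewrite (rsum_ext _ _ (fun _ => 0)) by (intros k _; destruct (Nat.eqb k b); auto).
  rewrite rsum_const; lra.
Qed.

Lemma rsum_cauchy_schwarz m F : (rsum m F)^2 <= INR m * rsum m (fun k => F k ^ 2).
Proof.
  induction m as [|m IH]; simpl rsum; [simpl; lra|].
  rewrite S_INR.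
  assert (Hcross : 2 * rsum m F * F m <= rsum m (fun k => F k ^ 2) + INR m * F m ^ 2).
  { replace (2 * rsum m F * F m) with (rsum m (fun k => (2 * F m) * F k))
      by (rewrite rsum_scal; ring).
    rewrite <- (rsum_const m (F m ^ 2)), <- rsum_plus. apply rsum_le. intros k _.
    pose proof (pow2_ge_0 (F k - F m)). simpl in *; nra. }
  set (S0 := rsum m F) in *. set (Q0 := rsum m (fun k => F k ^ 2)) in *.
  simpl in *. fold Q0. nra.
Qed.

Lemma le0_of_geometric a C : (forall m, a <= C * (/2)^m) -> a <= 0.
Proof.
  intros H. destruct (Rle_dec a 0) as [|Hpos]; auto. exfalso.
  assert (HC : 0 < C) by (specialize (H O); simpl in H; lra).
  destruct (pow_lt_1_zero (/2) ltac:(rewrite Rabs_pos_eq; lra) (a / C)) as [K HK].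
  { apply Rdiv_lt_0_compat; lra. }
  specialize (HK K (le_n _)). specialize (H K).
  rewrite Rabs_pos_eq in HK by (apply pow_le; lra).
  apply Rmult_lt_compat_l with (r := C) in HK; auto.
  replace (C * (a / C)) with a in HK by (field; lra). lra.
Qed.

Lemma le_of_le_eps a b : (forall eps, 0 < eps -> a <= b + eps) -> a <= b.
Proof.
  intros H. destruct (Rle_dec a b); auto. specialize (H ((a - b) / 2) ltac:(lra)). lra.
Qed.

Lemma abs_le0 a : Rabs a <= 0 -> a = 0.
Proof. intros H. pose proof (Rabs_pos a). destruct (Rcase_abs a); [rewrite Rabs_left in H|rewrite Rabs_right in H]; lra. Qed.

Lemma lt_of_sq_lt a b : 0 <= b -> a ^ 2 < b ^ 2 -> a < b.
Proof.
  intros Hb Hsq. apply Rnot_le_lt. intros Hle.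
  assert (b ^ 2 <= a ^ 2) by (apply pow_incr; lra). lra.
Qed.

Lemma linear_small a b : 0 <= a -> 0 < b ->
  exists d, 0 < d /\ forall M, 0 <= M <= d -> a * M <= b.
Proof.
  intros Ha Hb. exists (b / (a + 1)). split; [apply Rdiv_lt_0_compat; lra|].
  intros M HM. apply Rle_trans with ((a + 1) * (b / (a + 1))).
  - apply Rmult_le_compat; lra.
  - right. field. lra.
Qed.

(** * A scalar comparison principle *)

Section ScalarComparison.
Variables (q dq : R -> R).
Hypothesis Hderiv : forall t, 0 < t -> derivable_pt_lim q t (dq t).
Hypothesis Hright0 : forall eps, 0 < eps -> exists d, 0 < d /\
  forall t, 0 <= t < d -> Rabs (q t - q 0) < eps.

Lemma continuous_at_pos t : 0 < t -> forall eps, 0 < eps -> exists d, 0 < d /\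
  forall s, Rabs (s - t) < d -> Rabs (q s - q t) < eps.
Proof.
  intros Ht eps Heps.
  pose proof (derivable_continuous_pt q t (exist _ (dq t) (Hderiv t Ht))) as Hc.
  destruct (Hc eps Heps) as [alp [Halp H]]. exists alp. split; auto. intros s Hs.
  destruct (Req_dec s t) as [->|Hne]; [rewrite Rminus_diag, Rabs_R0; auto|].
  apply H. split; [split; [exact I | auto] | auto].
Qed.

Lemma right_continuous a : 0 <= a -> forall eps, 0 < eps -> exists d, 0 < d /\
  forall s, a <= s < a + d -> Rabs (q s - q a) < eps.
Proof.
  intros Ha eps Heps. destruct (Req_dec a 0) as [->|Ha0].
  - destruct (Hright0 eps Heps) as [d [Hd H]]. exists d. split; auto. intros s Hs; apply H; lra.
  - destruct (continuous_at_pos a ltac:(lra) eps Heps) as [d [Hd H]]. exists d. split; auto.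
    intros s Hs; apply H. rewrite Rabs_pos_eq; lra.
Qed.

Lemma decrease_rate a b m : 0 <= a < b -> 0 <= m -> (forall t, a < t < b -> dq t <= - m) ->
  q b <= q a - m * (b - a).
Proof.
  intros Hab Hm Hdq. apply le_of_le_eps. intros eps Heps.
  destruct (right_continuous a ltac:(lra) (eps / 2) ltac:(lra)) as [d [Hd Hrc]].
  destruct (linear_small m (eps / 2) Hm ltac:(lra)) as [d' [Hd' Hsmall]].
  (* compare with a point [a + del] where [q] is differentiable *)
  set (del := Rmin d (Rmin (b - a) d') / 2).
  pose proof (Rmin_l d (Rmin (b - a) d')). pose proof (Rmin_r d (Rmin (b - a) d')).
  pose proof (Rmin_l (b - a) d'). pose proof (Rmin_r (b - a) d').
  assert (0 < Rmin d (Rmin (b - a) d')) by (repeat apply Rmin_pos; lra).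
  assert (Hdel : 0 < del) by (unfold del; lra).
  assert (del < d /\ del < b - a /\ del <= d') as [Hd1 [Hd2 Hd3]] by (unfold del; lra).
  destruct (MVT_cor2 q dq (a + del) b ltac:(lra)) as [c [Hc1 Hc2]].
  { intros t Ht. apply Hderiv. lra. }
  assert (dq c <= - m) by (apply Hdq; lra).
  assert (Hq : Rabs (q (a + del) - q a) < eps / 2) by (apply Hrc; lra).
  apply Rabs_def2 in Hq. pose proof (Hsmall del ltac:(lra)).
  assert (dq c * (b - (a + del)) <= - m * (b - (a + del))) by (apply Rmult_le_compat_r; lra).
  nra.
Qed.

(** If [dq <= 0] wherever [q < rho] and [q 0 < rho], then [q t <= q 0]: at the
    first time [q] would reach a level [lam] in [(q 0, rho)], it could not have
    increased. *)
Lemma sublevel_invariant rho : q 0 < rho -> (forall t, 0 < t -> q t < rho -> dq t <= 0) ->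
  forall t, 0 <= t -> q t <= q 0.
Proof.
  intros Hq0 Hdq t1 Ht1. apply Rnot_lt_le. intros Hgt.
  set (lam := (q 0 + Rmin (q t1) rho) / 2).
  pose proof (Rmin_l (q t1) rho). pose proof (Rmin_r (q t1) rho).
  pose proof (Rmin_glb_lt (q t1) rho (q 0) ltac:(lra) Hq0).
  assert (q 0 < lam /\ lam < q t1 /\ lam < rho) as [Hl1 [Hl2 Hl3]] by (unfold lam; lra).
  set (E := fun t => 0 <= t <= t1 /\ forall s, 0 <= s <= t -> q s < lam).
  assert (HE0 : E 0) by (split; [lra | intros s Hs; replace s with 0 by lra; auto]).
  destruct (completeness E) as [tau [Hub Hlub]].
  { exists t1. intros t [Ht _]. lra. }
  { exists 0; auto. }
  assert (Htau0 : 0 <= tau) by (apply Hub; auto).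
  assert (Htau1 : tau <= t1) by (apply Hlub; intros t [Ht _]; lra).
  (* before [tau] the level [lam] is not reached *)
  assert (Hbefore : forall s, 0 <= s < tau -> q s < lam).
  { intros s Hs. apply NNPP; intros Hn.
    assert (Hs_ub : is_upper_bound E s).
    { intros t [Ht Hall]. apply Rnot_lt_le. intros Hst. apply Hn. apply Hall. lra. }
    specialize (Hlub s Hs_ub). lra. }
  (* at [tau] it is reached, by right continuity *)
  assert (Hat : lam <= q tau).
  { apply Rnot_lt_le. intros Hlt.
    assert (Htt : tau < t1) by (destruct (Req_dec tau t1) as [->|]; lra).
    destruct (right_continuous tau Htau0 (lam - q tau) ltac:(lra)) as [d [Hd Hrc]].
    set (tau' := tau + Rmin d (t1 - tau) / 2).
    assert (Hm : 0 < Rmin d (t1 - tau)) by (apply Rmin_pos; lra).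
    pose proof (Rmin_l d (t1 - tau)). pose proof (Rmin_r d (t1 - tau)).
    assert (Htau' : E tau').
    { split; [unfold tau'; lra|]. intros s Hs. destruct (Rlt_le_dec s tau); [apply Hbefore; lra|].
      assert (Hqs : Rabs (q s - q tau) < lam - q tau) by (apply Hrc; unfold tau' in Hs; lra).
      apply Rabs_def2 in Hqs. lra. }
    specialize (Hub _ Htau'). unfold tau' in Hub. lra. }
  assert (Htaup : 0 < tau) by (destruct (Req_dec tau 0) as [->|]; lra).
  assert (q tau <= q 0 - 0 * (tau - 0)); [|lra].
  apply decrease_rate; [lra | lra |]. intros t Ht. rewrite Ropp_0.
  apply Hdq; [lra|]. pose proof (Hbefore t ltac:(lra)). lra.
Qed.

Lemma lyapunov_decay rho kap : 0 < kap -> (forall t, 0 <= t -> 0 <= q t) -> q 0 < rho ->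
  (forall t, 0 < t -> q t < rho -> dq t <= - kap * q t) ->
  (forall t, 0 <= t -> q t <= q 0) /\
  (forall eta, 0 < eta -> exists T, forall t, T <= t -> q t < eta).
Proof.
  intros Hk Hpos Hq0 Hdq.
  assert (Hbar : forall t, 0 <= t -> q t <= q 0).
  { apply (sublevel_invariant rho); auto. intros t Ht Hq.
    pose proof (Hdq t Ht Hq). pose proof (Hpos t ltac:(lra)). nra. }
  assert (Hdq' : forall t, 0 < t -> dq t <= - kap * q t).
  { intros t Ht. apply Hdq; auto. pose proof (Hbar t ltac:(lra)). lra. }
  assert (Hmono : forall t1 t2, 0 <= t1 <= t2 -> q t2 <= q t1).
  { intros t1 t2 Ht. destruct (Req_dec t1 t2) as [->|Hne]; [lra|].
    assert (q t2 <= q t1 - 0 * (t2 - t1)); [|lra].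
    apply decrease_rate; [lra | lra |]. intros t Htt.
    pose proof (Hdq' t ltac:(lra)). pose proof (Hpos t ltac:(lra)). nra. }
  split; auto.
  (* while [q >= eta] it decreases at rate [kap eta], so it goes below [eta] by time [T] *)
  intros eta Heta. set (T := q 0 / (kap * eta) + 1).
  assert (HT : 0 < T).
  { assert (0 <= q 0 / (kap * eta))
      by (apply Rmult_le_pos; [apply Hpos; lra | left; apply Rinv_0_lt_compat; nra]).
    unfold T; lra. }
  assert (HqT : q T < eta).
  { apply Rnot_le_lt. intros HqT.
    assert (q T <= q 0 - (kap * eta) * (T - 0)).
    { apply decrease_rate; [lra | nra |]. intros t Ht.
      pose proof (Hdq' t ltac:(lra)). pose proof (Hmono t T ltac:(lra)). nra. }
    assert ((kap * eta) * T = q 0 + kap * eta) by (unfold T; field; nra). nra. }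
  exists T. intros t Ht. pose proof (Hmono T t ltac:(lra)). lra.
Qed.

End ScalarComparison.

Section Simplex.
Variables (N : nat) (n : nat -> nat).

Definition sumS (G : nat -> nat -> R) : R := rsum N (fun i => rsum (n i) (fun h => G i h)).

Lemma sumS_ext G H : (forall i h, inS N n i h -> G i h = H i h) -> sumS G = sumS H.
Proof. intros E; apply rsum_ext; intros i Hi; apply rsum_ext; intros h Hh; apply E; split; auto. Qed.

Lemma sumS_plus G H : sumS (fun i h => G i h + H i h) = sumS G + sumS H.
Proof. unfold sumS. rewrite <- rsum_plus. apply rsum_ext; intros; apply rsum_plus. Qed.

Lemma sumS_minus G H : sumS (fun i h => G i h - H i h) = sumS G - sumS H.
Proof. unfold sumS. rewrite <- rsum_minus. apply rsum_ext; intros; apply rsum_minus. Qed.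

Lemma sumS_scal a G : sumS (fun i h => a * G i h) = a * sumS G.
Proof. unfold sumS. rewrite <- rsum_scal. apply rsum_ext; intros; apply rsum_scal. Qed.

Lemma sumS_le G H : (forall i h, inS N n i h -> G i h <= H i h) -> sumS G <= sumS H.
Proof. intros E; apply rsum_le; intros i Hi; apply rsum_le; intros h Hh; apply E; split; auto. Qed.

Lemma sumS_nonneg G : (forall i h, inS N n i h -> 0 <= G i h) -> 0 <= sumS G.
Proof. intros E; apply rsum_nonneg; intros i Hi; apply rsum_nonneg; intros h Hh; apply E; split; auto. Qed.

Lemma sumS_abs G : Rabs (sumS G) <= sumS (fun i h => Rabs (G i h)).
Proof. eapply Rle_trans; [apply rsum_abs|]. apply rsum_le. intros; apply rsum_abs. Qed.

Lemma sumS_term_le G i h : (forall i h, inS N n i h -> 0 <= G i h) -> inS N n i h -> G i h <= sumS G.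
Proof.
  intros E [Hi Hh]. eapply Rle_trans.
  - apply (rsum_term_le (n i) (fun h => G i h) h); auto. intros; apply E; split; auto.
  - apply (rsum_term_le N (fun i => rsum (n i) (fun h => G i h)) i); auto.
    intros; apply rsum_nonneg; intros; apply E; split; auto.
Qed.

Definition card_S : R := sumS (fun _ _ => 1).

Lemma card_S_nonneg : 0 <= card_S.
Proof. apply sumS_nonneg; intros; lra. Qed.

Lemma sumS_bound G B : (forall i h, inS N n i h -> G i h <= B) -> sumS G <= card_S * B.
Proof.
  intros E. unfold card_S. rewrite Rmult_comm, <- sumS_scal.
  apply sumS_le. intros; rewrite Rmult_1_r; auto.
Qed.

Definition cs_const : R := INR N * rsum N (fun i => INR (n i)).

Lemma cs_const_nonneg : 0 <= cs_const.
Proof. apply Rmult_le_pos; [apply pos_INR | apply rsum_nonneg; intros; apply pos_INR]. Qed.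

Lemma sumS_cauchy_schwarz G : (sumS G)^2 <= cs_const * sumS (fun i h => G i h ^ 2).
Proof.
  eapply Rle_trans; [apply rsum_cauchy_schwarz|].
  unfold cs_const, sumS. rewrite Rmult_assoc. apply Rmult_le_compat_l; [apply pos_INR|].
  rewrite <- rsum_scal. apply rsum_le. intros i Hi.
  eapply Rle_trans; [apply rsum_cauchy_schwarz|]. apply Rmult_le_compat_r.
  - apply rsum_nonneg; intros; apply pow2_ge_0.
  - apply (rsum_term_le N (fun i => INR (n i))); auto. intros; apply pos_INR.
Qed.

Lemma dist_nonneg x y : 0 <= dist N n x y.
Proof. apply sumS_nonneg; intros; apply Rabs_pos. Qed.

Lemma dist_sym x y : dist N n x y = dist N n y x.
Proof. apply sumS_ext; intros. apply Rabs_minus_sym. Qed.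

Lemma dist_self x : dist N n x x = 0.
Proof.
  change (sumS (fun i h => Rabs (x i h - x i h)) = 0).
  rewrite (sumS_ext _ (fun _ _ => 0 * 1)) by (intros; rewrite Rminus_diag, Rabs_R0; ring).
  rewrite sumS_scal. ring.
Qed.

Lemma dist_tri x y z : dist N n x z <= dist N n x y + dist N n y z.
Proof.
  change (sumS (fun i h => Rabs (x i h - z i h))
          <= sumS (fun i h => Rabs (x i h - y i h)) + sumS (fun i h => Rabs (y i h - z i h))).
  rewrite <- sumS_plus. apply sumS_le; intros.
  replace (x i h - z i h) with ((x i h - y i h) + (y i h - z i h)) by ring. apply Rabs_triang.
Qed.

Lemma coord_le_dist x y i h : inS N n i h -> Rabs (x i h - y i h) <= dist N n x y.
Proof. intros H. apply (sumS_term_le (fun i h => Rabs (x i h - y i h))); auto. intros; apply Rabs_pos. Qed.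

Lemma row_le_dist x y i : (i < N)%nat ->
  rsum (n i) (fun h => Rabs (x i h - y i h)) <= dist N n x y.
Proof.
  intros Hi. apply (rsum_term_le N (fun i => rsum (n i) (fun h => Rabs (x i h - y i h)))); auto.
  intros; apply rsum_nonneg; intros; apply Rabs_pos.
Qed.

Lemma dist_le0_coord x y i h : dist N n x y <= 0 -> inS N n i h -> x i h = y i h.
Proof.
  intros H Hs. pose proof (coord_le_dist x y i h Hs).
  cut (x i h - y i h = 0); [lra|]. apply abs_le0. lra.
Qed.

Lemma Delta_coord x i h : in_Delta N n x -> inS N n i h -> 0 <= x i h <= 1.
Proof.
  intros [HD _] [Hi Hh]. destruct (HD i Hi) as [Hp [_ Hs]]. split; auto.
  rewrite <- Hs. apply (rsum_term_le (n i) (x i) h); auto.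
Qed.

Lemma Delta_junk x i h : in_Delta N n x -> ~ inS N n i h -> x i h = 0.
Proof.
  intros [HD HJ] H. destruct (Nat.lt_ge_cases i N) as [Hi|Hi]; [|apply HJ; auto].
  destruct (HD i Hi) as [_ [Hz _]]. apply Hz.
  destruct (Nat.lt_ge_cases h (n i)); auto. exfalso; apply H; split; auto.
Qed.

(** On the simplex, the distance controls every coordinate, junk ones included. *)
Lemma coord_le_dist_Delta x y i h : in_Delta N n x -> in_Delta N n y ->
  Rabs (x i h - y i h) <= dist N n x y.
Proof.
  intros Hx Hy. destruct (classic (inS N n i h)) as [H|H]; [apply coord_le_dist; auto|].
  rewrite (Delta_junk x i h), (Delta_junk y i h), Rminus_0_r, Rabs_R0 by auto.
  apply dist_nonneg.
Qed.

Lemma sumS_Delta x : in_Delta N n x -> sumS x = INR N.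
Proof.
  intros [HD _]. unfold sumS. rewrite (rsum_ext _ _ (fun _ => 1)), rsum_const; [ring|].
  intros i Hi. destruct (HD i Hi) as [_ [_ H]]. auto.
Qed.

Lemma Delta_closed (y : nat -> pt) l C : (forall m, in_Delta N n (y m)) ->
  (forall m i h, Rabs (y m i h - l i h) <= C * (/2)^m) -> in_Delta N n l.
Proof.
  intros HyD Hyl.
  assert (Hzero : forall i h, (forall m, y m i h = 0) -> l i h = 0).
  { intros i h Hz. assert (Rabs (l i h) <= 0).
    { apply (le0_of_geometric _ C). intros m. specialize (Hyl m i h).
      rewrite Hz, Rminus_0_l, Rabs_Ropp in Hyl. auto. }
    apply abs_le0; auto. }
  split; [intros i Hi; split; [|split] | intros i h Hi; apply Hzero; intros m; apply (HyD m); auto].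
  - intros h Hh. cut (- l i h <= 0); [lra|].
    apply (le0_of_geometric _ C). intros m. specialize (Hyl m i h).
    destruct (HyD m) as [HD _]. destruct (HD i Hi) as [Hp _]. specialize (Hp h Hh).
    pose proof (Rle_abs (y m i h - l i h)). lra.
  - intros h Hh. apply Hzero. intros m. destruct (HyD m) as [HD _]. apply (HD i Hi); auto.
  - assert (Rabs (1 - rsum (n i) (l i)) <= 0).
    { apply (le0_of_geometric _ (INR (n i) * C)). intros m.
      destruct (HyD m) as [HD _]. destruct (HD i Hi) as [_ [_ Hs]].
      rewrite <- Hs, <- rsum_minus. eapply Rle_trans; [apply rsum_abs|].
      eapply Rle_trans; [apply (rsum_le _ _ (fun _ => C * (/2)^m)); intros; apply Hyl|].
      rewrite rsum_const. right; ring. }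
    apply abs_le0 in H. lra.
Qed.

(** Near a vertex, the distance is
    governed by the mass on the non-selected types, summed by [off b]. *)

Definition selection (b : nat -> nat) : Prop := forall i, (i < N)%nat -> (b i < n i)%nat.

Definition vertex (e : pt) (b : nat -> nat) : Prop :=
  in_Delta N n e /\ selection b /\
  forall i h, inS N n i h -> e i h = if Nat.eqb h (b i) then 1 else 0.

Definition off (b : nat -> nat) (G : nat -> nat -> R) : nat -> nat -> R :=
  fun i h => if Nat.eqb h (b i) then 0 else G i h.

Lemma off_nonneg b G : (forall i h, inS N n i h -> 0 <= G i h) -> 0 <= sumS (off b G).
Proof. intros H; apply sumS_nonneg; intros i h Hs; unfold off; destruct (Nat.eqb h (b i)); [lra|auto]. Qed.

Lemma selected_coord b x i : (i < N)%nat -> (b i < n i)%nat -> in_Delta N n x ->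
  x i (b i) = 1 - rsum (n i) (fun h => if Nat.eqb h (b i) then 0 else x i h).
Proof.
  intros Hi Hb [HD _]. destruct (HD i Hi) as [_ [_ Hs]].
  rewrite (rsum_split _ _ _ Hb) in Hs. lra.
Qed.

Lemma off_row_nonneg b x i : (i < N)%nat -> in_Delta N n x ->
  0 <= rsum (n i) (fun h => if Nat.eqb h (b i) then 0 else x i h).
Proof.
  intros Hi Hx. apply rsum_nonneg. intros h Hh. destruct (Nat.eqb h (b i)); [lra|].
  apply (Delta_coord x i h Hx); split; auto.
Qed.

Lemma dist_to_vertex e b x : vertex e b -> in_Delta N n x -> dist N n x e = 2 * sumS (off b x).
Proof.
  intros [He [Hb Hv]] Hx. unfold dist, sumS. rewrite <- rsum_scal. apply rsum_ext; intros i Hi.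
  rewrite (rsum_split _ _ (b i) (Hb i Hi)). cbv beta.
  rewrite (selected_coord b x i Hi (Hb i Hi) Hx), Hv, Nat.eqb_refl by (split; auto).
  unfold off.
  rewrite (rsum_ext _ (fun k => if Nat.eqb k (b i) then 0 else Rabs (x i k - e i k))
             (fun h => if Nat.eqb h (b i) then 0 else x i h)).
  2:{ intros h Hh. rewrite Hv by (split; auto). destruct (Nat.eqb h (b i)); auto.
      rewrite Rminus_0_r. apply Rabs_pos_eq, (Delta_coord x i h Hx). split; auto. }
  pose proof (off_row_nonneg b x i Hi Hx) as Hs.
  set (s := rsum _ _) in *. replace (1 - s - 1) with (- s) by ring.
  rewrite Rabs_Ropp, Rabs_pos_eq by lra. lra.
Qed.

Lemma dist_le_off b x y : selection b -> in_Delta N n x -> in_Delta N n y ->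
  dist N n x y <= 2 * sumS (off b (fun i h => Rabs (x i h - y i h))).
Proof.
  intros Hb Hx Hy. unfold dist, sumS. rewrite <- rsum_scal. apply rsum_le; intros i Hi.
  rewrite (rsum_split _ _ (b i) (Hb i Hi)). cbv beta. unfold off.
  rewrite (selected_coord b x i Hi (Hb i Hi) Hx), (selected_coord b y i Hi (Hb i Hi) Hy).
  set (A := rsum (n i) (fun h => if Nat.eqb h (b i) then 0 else Rabs (x i h - y i h))).
  enough (Rabs (rsum (n i) (fun h => (if Nat.eqb h (b i) then 0 else x i h)
                                   - (if Nat.eqb h (b i) then 0 else y i h))) <= A).
  { rewrite rsum_minus in H.
    replace (1 - rsum (n i) (fun h => if Nat.eqb h (b i) then 0 else x i h)
             - (1 - rsum (n i) (fun h => if Nat.eqb h (b i) then 0 else y i h)))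
      with (- (rsum (n i) (fun h => if Nat.eqb h (b i) then 0 else x i h)
               - rsum (n i) (fun h => if Nat.eqb h (b i) then 0 else y i h))) by ring.
    rewrite Rabs_Ropp. lra. }
  eapply Rle_trans; [apply rsum_abs|]. apply rsum_le. intros h _.
  destruct (Nat.eqb h (b i)); [rewrite Rminus_0_r, Rabs_R0|]; lra.
Qed.

Definition seg (x y : pt) (t : R) : pt := fun j k => x j k + t * (y j k - x j k).

Lemma seg_0 x y : seg x y 0 = x.
Proof. do 2 (apply functional_extensionality; intro). unfold seg; ring. Qed.

Lemma seg_1 x y : seg x y 1 = y.
Proof. do 2 (apply functional_extensionality; intro). unfold seg; ring. Qed.

Lemma seg_ball x y e t rho : 0 <= t <= 1 -> dist N n x e < rho -> dist N n y e < rho ->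
  dist N n (seg x y t) e < rho.
Proof.
  intros Ht Hx Hy. apply Rle_lt_trans with ((1 - t) * dist N n x e + t * dist N n y e).
  - unfold dist. fold (sumS (fun i h => Rabs (x i h - e i h))) (sumS (fun i h => Rabs (y i h - e i h))).
    fold (sumS (fun i h => Rabs (seg x y t i h - e i h))).
    rewrite <- !sumS_scal, <- sumS_plus. apply sumS_le; intros i h _. unfold seg.
    replace (x i h + t * (y i h - x i h) - e i h)
      with ((1 - t) * (x i h - e i h) + t * (y i h - e i h)) by ring.
    eapply Rle_trans; [apply Rabs_triang|].
    rewrite !Rabs_mult, (Rabs_pos_eq (1 - t)), (Rabs_pos_eq t) by lra. lra.
  - assert (t * dist N n y e <= t * rho) by (apply Rmult_le_compat_l; lra).
    destruct (Rlt_or_le t 1).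
    + assert ((1 - t) * dist N n x e < (1 - t) * rho) by (apply Rmult_lt_compat_l; lra). lra.
    + replace t with 1 by lra. lra.
Qed.

Lemma seg_Delta x y t : 0 <= t <= 1 -> in_Delta N n x -> in_Delta N n y -> in_Delta N n (seg x y t).
Proof.
  intros Ht [HDx HJx] [HDy HJy]. split; unfold seg.
  - intros i Hi. destruct (HDx i Hi) as [P1 [Z1 S1]]. destruct (HDy i Hi) as [P2 [Z2 S2]].
    split; [|split].
    + intros h Hh. specialize (P1 h Hh). specialize (P2 h Hh). nra.
    + intros h Hh. rewrite Z1, Z2 by auto. ring.
    + rewrite rsum_plus, rsum_scal, rsum_minus, S1, S2. ring.
  - intros i h Hi. rewrite HJx, HJy by auto. ring.
Qed.

Lemma seg_derivative U g Dg x y t : C1_on N n U g Dg -> U (seg x y t) ->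
  derivable_pt_lim (fun s => g (seg x y s)) t
    (sumS (fun j k => Dg (seg x y t) j k * (y j k - x j k))).
Proof.
  intros [HF _] HU eps Heps.
  set (D := dist N n y x). assert (HD : 0 <= D) by apply dist_nonneg.
  set (dphi := sumS (fun j k => Dg (seg x y t) j k * (y j k - x j k))).
  destruct (HF (seg x y t) HU (eps / (2 * (D + 1)))) as [d [Hd Hest]].
  { apply Rdiv_lt_0_compat; lra. }
  assert (Hdp : 0 < d / (D + 1)) by (apply Rdiv_lt_0_compat; lra).
  exists (mkposreal _ Hdp). intros h Hh0 Hh. simpl in Hh.
  assert (Hdist : dist N n (seg x y (t + h)) (seg x y t) = Rabs h * D).
  { unfold D, dist. fold (sumS (fun i k => Rabs (y i k - x i k))).
    rewrite <- sumS_scal. apply sumS_ext; intros. unfold seg. rewrite <- Rabs_mult. f_equal. ring. }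
  assert (Hlin : rsum N (fun j => rsum (n j) (fun k =>
                   Dg (seg x y t) j k * (seg x y (t + h) j k - seg x y t j k))) = h * dphi).
  { unfold dphi. rewrite <- sumS_scal. apply sumS_ext; intros. unfold seg. ring. }
  assert (Hlt : dist N n (seg x y (t + h)) (seg x y t) < d).
  { rewrite Hdist. apply Rmult_lt_compat_r with (r := D + 1) in Hh; [|lra].
    unfold Rdiv in Hh. rewrite Rmult_assoc, Rinv_l, Rmult_1_r in Hh by lra.
    assert (Rabs h * D <= Rabs h * (D + 1)) by (apply Rmult_le_compat_l; [apply Rabs_pos|lra]). lra. }
  specialize (Hest _ Hlt). rewrite Hlin, Hdist in Hest.
  replace ((g (seg x y (t + h)) - g (seg x y t)) / h - dphi)
    with ((g (seg x y (t + h)) - g (seg x y t) - h * dphi) / h) by (field; auto).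
  unfold Rdiv. rewrite Rabs_mult, Rabs_inv.
  assert (Hah : 0 < Rabs h) by (apply Rabs_pos_lt; auto).
  apply Rle_lt_trans with (eps / (2 * (D + 1)) * (Rabs h * D) * / Rabs h).
  { apply Rmult_le_compat_r; auto. left; apply Rinv_0_lt_compat; auto. }
  replace (eps / (2 * (D + 1)) * (Rabs h * D) * / Rabs h) with (eps * (D / (2 * (D + 1))))
    by (field; lra).
  assert (D / (2 * (D + 1)) < 1).
  { apply (Rmult_lt_reg_r (2 * (D + 1))); [lra|].
    unfold Rdiv. rewrite Rmult_assoc, Rinv_l by lra. lra. }
  nra.
Qed.

Lemma segment_mvt U g Dg x y : C1_on N n U g Dg -> (forall t, 0 <= t <= 1 -> U (seg x y t)) ->
  exists c, 0 < c < 1 /\ g y - g x = sumS (fun j k => Dg (seg x y c) j k * (y j k - x j k)).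
Proof.
  intros HC HU.
  destruct (MVT_cor2 (fun t => g (seg x y t))
             (fun t => sumS (fun j k => Dg (seg x y t) j k * (y j k - x j k))) 0 1)
    as [c [Hc1 Hc2]]; [lra| intros t Ht; apply (seg_derivative U); auto |].
  exists c. split; auto. rewrite seg_1, seg_0 in Hc1. lra.
Qed.

Lemma derive_rsum m (F : R -> nat -> R) dF t0 :
  (forall k, (k < m)%nat -> derivable_pt_lim (fun t => F t k) t0 (dF k)) ->
  derivable_pt_lim (fun t => rsum m (F t)) t0 (rsum m dF).
Proof.
  induction m as [|m IH]; intros H; simpl; [apply (derivable_pt_lim_const 0)|].
  apply (derivable_pt_lim_plus (fun t => rsum m (F t)) (fun t => F t m));
    [apply IH; intros; apply H; lia | apply H; lia].
Qed.

Lemma derive_sumS (F : R -> nat -> nat -> R) dF t0 :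
  (forall i h, inS N n i h -> derivable_pt_lim (fun t => F t i h) t0 (dF i h)) ->
  derivable_pt_lim (fun t => sumS (F t)) t0 (sumS dF).
Proof.
  intros H. apply (derive_rsum N (fun t i => rsum (n i) (fun h => F t i h))).
  intros i Hi. apply (derive_rsum (n i) (fun t h => F t i h)). intros h Hh. apply H; split; auto.
Qed.

(** ** Banach's fixed point theorem on a closed ball of [Delta] *)

Lemma half_pow_bounds m : 0 <= (/2)^m <= 1.
Proof. induction m; simpl; lra. Qed.

Lemma half_pow_antitone m p : (m <= p)%nat -> (/2)^p <= (/2)^m.
Proof.
  intros Hmp. replace p with (m + (p - m))%nat by lia. rewrite pow_add.
  pose proof (half_pow_bounds m). pose proof (half_pow_bounds (p - m)). nra.
Qed.

Lemma half_pow_small a eps : 0 <= a -> 0 < eps -> exists K, a * (/2)^K < eps.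
Proof.
  intros Ha He.
  destruct (pow_lt_1_zero (/2) ltac:(rewrite Rabs_pos_eq; lra) (eps / (a + 1))) as [K HK].
  { apply Rdiv_lt_0_compat; lra. }
  exists K. specialize (HK K (le_n _)). rewrite Rabs_pos_eq in HK by (apply pow_le; lra).
  apply Rmult_lt_compat_l with (r := a + 1) in HK; [|lra].
  replace ((a + 1) * (eps / (a + 1))) with eps in HK by (field; lra).
  pose proof (half_pow_bounds K). nra.
Qed.

Lemma geometric_limit (y : nat -> pt) a : 0 <= a -> (forall m, in_Delta N n (y m)) ->
  (forall m p, (m <= p)%nat -> dist N n (y m) (y p) <= a * (/2)^m) ->
  exists l, in_Delta N n l /\ forall m, dist N n (y m) l <= card_S * (a * (/2)^m).
Proof.
  intros Ha HyD Hcauchy.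
  assert (Hcoord : forall m p i h, (m <= p)%nat -> Rabs (y m i h - y p i h) <= a * (/2)^m).
  { intros. eapply Rle_trans; [apply coord_le_dist_Delta; auto | apply Hcauchy; auto]. }
  assert (HC : forall i h, Cauchy_crit (fun m => y m i h)).
  { intros i h eps Heps. destruct (half_pow_small a eps Ha Heps) as [K HK]. exists K.
    intros p q Hp Hq. unfold R_dist.
    destruct (Nat.le_ge_cases p q) as [Hpq|Hqp]; [|rewrite Rabs_minus_sym];
      (eapply Rle_lt_trans; [apply Hcoord; auto|]);
      (eapply Rle_lt_trans; [|apply HK]); apply Rmult_le_compat_l; auto; apply half_pow_antitone; auto. }
  set (l := fun i h => proj1_sig (R_complete _ (HC i h))).
  assert (Hl : forall m i h, Rabs (y m i h - l i h) <= a * (/2)^m).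
  { intros m i h. unfold l. destruct (R_complete _ (HC i h)) as [v Hv]. simpl.
    apply le_of_le_eps. intros eps Heps. destruct (Hv eps Heps) as [K HK].
    specialize (HK (max K m) ltac:(lia)). unfold R_dist in HK.
    pose proof (Hcoord m (max K m) i h ltac:(lia)).
    replace (y m i h - v) with ((y m i h - y (max K m) i h) + (y (max K m) i h - v)) by ring.
    eapply Rle_trans; [apply Rabs_triang | lra]. }
  exists l. split; [apply (Delta_closed y l a); auto|].
  intros m. apply sumS_bound. intros; apply Hl.
Qed.

Section Contraction.
Variables (T : pt -> pt) (x0 : pt) (C : R).
Hypothesis HC : 0 <= C.
Hypothesis Hx0 : in_Delta N n x0.
Hypothesis Hinv : forall x, in_Delta N n x -> dist N n x x0 <= C ->
  in_Delta N n (T x) /\ dist N n (T x) x0 <= C.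
Hypothesis Hcontr : forall x y, in_Delta N n x -> dist N n x x0 <= C ->
  in_Delta N n y -> dist N n y x0 <= C -> dist N n (T x) (T y) <= / 2 * dist N n x y.

Definition orbit (m : nat) : pt := Nat.iter m T x0.

Lemma orbit_in_ball m : in_Delta N n (orbit m) /\ dist N n (orbit m) x0 <= C.
Proof.
  induction m as [|m [IHD IHd]]; [split; auto; simpl; rewrite dist_self; auto|].
  apply (Hinv (orbit m)); auto.
Qed.

Lemma orbit_cauchy m p : (m <= p)%nat -> dist N n (orbit m) (orbit p) <= 2 * C * (/2)^m.
Proof.
  assert (Hstep : forall k, dist N n (orbit (S k)) (orbit k) <= (/2)^k * C).
  { intros k. induction k as [|k IH]; [rewrite pow_O, Rmult_1_l; apply orbit_in_ball|].
    change (orbit (S (S k))) with (T (orbit (S k))). change (orbit (S k)) with (T (orbit k)) at 2.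
    eapply Rle_trans; [apply Hcontr; apply orbit_in_ball|].
    simpl. rewrite Rmult_assoc. apply Rmult_le_compat_l; [lra | exact IH]. }
  assert (Hsum : forall j, dist N n (orbit m) (orbit (m + j)%nat) <= 2 * C * (/2)^m * (1 - (/2)^j)).
  { induction j as [|j IH]; [rewrite Nat.add_0_r, dist_self; simpl; lra|].
    eapply Rle_trans; [apply (dist_tri _ (orbit (m + j)%nat))|].
    rewrite (dist_sym (orbit (m + j)%nat)). replace (m + S j)%nat with (S (m + j)) by lia.
    pose proof (Hstep (m + j)%nat). rewrite pow_add in H. rewrite <- tech_pow_Rmult.
    set (a := (/2)^m) in *. set (q := (/2)^j) in *. nra. }
  intros Hmp.
  replace p with (m + (p - m))%nat by lia. eapply Rle_trans; [apply Hsum|].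
  pose proof (half_pow_bounds (p - m)). pose proof (half_pow_bounds m).
  set (a := (/2)^m) in *. set (q := (/2)^(p - m)) in *. assert (0 <= C * a) by nra. nra.
Qed.

Lemma contraction_fixed_point :
  exists x, in_Delta N n x /\ dist N n x x0 <= C /\ forall i h, inS N n i h -> T x i h = x i h.
Proof.
  destruct (geometric_limit orbit (2 * C) ltac:(lra) (fun m => proj1 (orbit_in_ball m)) orbit_cauchy)
    as [x [HxD Hyx]].
  pose proof card_S_nonneg.
  assert (Hxx0 : dist N n x x0 <= C).
  { assert (dist N n x x0 - C <= 0); [|lra].
    apply (le0_of_geometric _ (card_S * (2 * C))). intros m.
    pose proof (dist_tri x (orbit m) x0). rewrite (dist_sym x (orbit m)) in H0.
    pose proof (Hyx m). pose proof (proj2 (orbit_in_ball m)). rewrite Rmult_assoc. lra. }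
  exists x. split; auto. split; auto.
  assert (Hfix : dist N n (T x) x <= 0).
  { apply (le0_of_geometric _ (card_S * (2 * C) * 2)). intros m.
    pose proof (dist_tri (T x) (T (orbit m)) x) as Htri.
    pose proof (Hcontr x (orbit m) HxD Hxx0 (proj1 (orbit_in_ball m)) (proj2 (orbit_in_ball m))) as Hc.
    change (T (orbit m)) with (orbit (S m)) in *.
    pose proof (Hyx (S m)) as HSm. pose proof (Hyx m) as Hm. rewrite dist_sym in Hm.
    rewrite <- tech_pow_Rmult in HSm. pose proof (half_pow_bounds m).
    set (a := (/2)^m) in *.
    assert (0 <= card_S * (2 * C * a)) by (apply Rmult_le_pos; [|apply Rmult_le_pos]; lra).
    replace (card_S * (2 * C * (/ 2 * a))) with (/ 2 * (card_S * (2 * C * a))) in HSm by ring.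
    replace (card_S * (2 * C) * 2 * a) with (2 * (card_S * (2 * C * a))) by ring. lra. }
  intros i h Hs. apply dist_le0_coord; auto.
Qed.

End Contraction.

Lemma fin_choice m (P : nat -> R -> R -> Prop) :
  (forall k r r' B B', P k r B -> 0 < r' <= r -> B <= B' -> P k r' B') ->
  (forall k, (k < m)%nat -> exists r B, 0 < r /\ P k r B) ->
  exists r B, 0 < r /\ forall k, (k < m)%nat -> P k r B.
Proof.
  intros Hmono. induction m as [|m IH]; intros H.
  - exists 1, 0. split; [lra | intros; lia].
  - destruct IH as [r1 [B1 [Hr1 H1]]]; [intros; apply H; lia|].
    destruct (H m ltac:(lia)) as [r2 [B2 [Hr2 H2]]].
    exists (Rmin r1 r2), (Rmax B1 B2). split; [apply Rmin_pos; auto|].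
    assert (0 < Rmin r1 r2) by (apply Rmin_pos; auto).
    intros k Hk. destruct (Nat.eq_dec k m) as [->|Hne].
    + eapply Hmono; eauto; [split; auto; apply Rmin_r | apply Rmax_r].
    + eapply Hmono; [apply H1; lia | split; auto; apply Rmin_l | apply Rmax_l].
Qed.

Lemma finS_choice (P : nat -> nat -> R -> R -> Prop) :
  (forall i h r r' B B', P i h r B -> 0 < r' <= r -> B <= B' -> P i h r' B') ->
  (forall i h, inS N n i h -> exists r B, 0 < r /\ P i h r B) ->
  exists r B, 0 < r /\ forall i h, inS N n i h -> P i h r B.
Proof.
  intros Hmono H.
  destruct (fin_choice N (fun i r B => forall h, (h < n i)%nat -> P i h r B)) as [r [B [Hr HP]]].
  - intros; eauto.
  - intros i Hi. apply fin_choice; [intros; eauto|]. intros h Hh. apply H; split; auto.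
  - exists r, B; split; auto. intros i h [Hi Hh]; auto.
Qed.

Section Fitness.
Variable f : nat -> nat -> pt -> R.

Lemma fitness_lipschitz e : fitness_hyp N n f -> in_Delta N n e ->
  exists r B, 0 < r /\ forall i h, inS N n i h -> 0 <= B /\
    forall x y, dist N n x e < r -> dist N n y e < r ->
      Rabs (f i h x - f i h y) <= B * dist N n x y.
Proof.
  intros [U [HUo [HDU HD]]] He.
  destruct (HUo e (HDU e He)) as [r0 [Hr0 Hball]].
  apply finS_choice.
  { intros i h r r' B B' [HB HP] Hr HBB. split; [lra|]. intros x y Hx Hy.
    eapply Rle_trans; [apply HP; lra|]. apply Rmult_le_compat_r; auto. apply dist_nonneg. }
  intros i h Hs. destruct (HD i h Hs) as [Df [[HF HC] _]].
  (* the partial derivatives stay within 1 of their values at [e] on a small ball *)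
  destruct (finS_choice (fun j k r _ => forall y, U y -> dist N n y e < r ->
                                         Rabs (Df y j k - Df e j k) < 1)) as [d [_ [Hd Hcont]]].
  { intros j k r r' B B' H Hr _ y Uy Hy. apply H; auto. lra. }
  { intros j k Hjk. destruct (HC e (HDU e He) j k Hjk 1 ltac:(lra)) as [d [Hd H]].
    exists d, 0. split; auto. }
  set (Bm := sumS (fun j k => Rabs (Df e j k)) + 1).
  exists (Rmin r0 d), Bm. split; [apply Rmin_pos; auto|]. split.
  { pose proof (sumS_nonneg (fun j k => Rabs (Df e j k)) ltac:(intros; apply Rabs_pos)). unfold Bm; lra. }
  intros x y Hx Hy. pose proof (Rmin_l r0 d). pose proof (Rmin_r r0 d).
  assert (Hseg : forall t, 0 <= t <= 1 -> dist N n (seg y x t) e < Rmin r0 d)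
    by (intros; apply seg_ball; auto).
  destruct (segment_mvt U (f i h) Df y x (conj HF HC)) as [c [Hc ->]].
  { intros t Ht. apply Hball. specialize (Hseg t Ht). lra. }
  eapply Rle_trans; [apply sumS_abs|].
  unfold dist. fold (sumS (fun i h => Rabs (x i h - y i h))). rewrite <- sumS_scal.
  apply sumS_le. intros j k Hjk.
  rewrite Rabs_mult, (Rabs_minus_sym (x j k)). apply Rmult_le_compat_r; [apply Rabs_pos|].
  assert (Hp : dist N n (seg y x c) e < Rmin r0 d) by (apply Hseg; lra).
  assert (U (seg y x c)) by (apply Hball; lra).
  assert (Rabs (Df (seg y x c) j k - Df e j k) < 1) by (apply Hcont; auto; lra).
  assert (Rabs (Df e j k) <= sumS (fun j k => Rabs (Df e j k)))
    by (apply (sumS_term_le (fun j k => Rabs (Df e j k))); auto; intros; apply Rabs_pos).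
  pose proof (Rabs_triang_inv (Df (seg y x c) j k) (Df e j k)). unfold Bm. lra.
Qed.

Lemma fitness_own_independent i h x y : fitness_hyp N n f -> inS N n i h ->
  in_Delta N n x -> in_Delta N n y -> (forall j k, j <> i -> x j k = y j k) -> f i h x = f i h y.
Proof.
  intros [U [HUo [HDU HD]]] Hs Hx Hy Hxy.
  destruct (HD i h Hs) as [Df [HC Hown]].
  destruct (segment_mvt U (f i h) Df x y HC) as [c [Hc Heq]].
  { intros t Ht. apply HDU, seg_Delta; auto. }
  rewrite (sumS_ext _ (fun _ _ => 0 * 1)) in Heq.
  { rewrite sumS_scal in Heq. lra. }
  intros j k [Hj Hk]. destruct (Nat.eq_dec j i) as [->|Hne].
  - rewrite Hown by (auto; apply HDU, seg_Delta; auto; lra). ring.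
  - rewrite Hxy by auto. ring.
Qed.

(** ** Strict Nash equilibria are strict vertices *)

Definition pure (h : nat) : nat -> R := fun k => if Nat.eqb k h then 1 else 0.

Lemma pure_Delta i h : (h < n i)%nat -> in_Delta_i n i (pure h).
Proof.
  intros Hh. unfold pure. split; [|split].
  - intros k _. destruct (Nat.eqb k h); lra.
  - intros k Hk. destruct (Nat.eqb_spec k h); [lia|auto].
  - apply rsum_delta; auto.
Qed.

Lemma replace_Delta e i z : in_Delta N n e -> (i < N)%nat -> in_Delta_i n i z ->
  in_Delta N n (replace_i e i z).
Proof.
  intros [HD HJ] Hi Hz. unfold replace_i. split.
  - intros j Hj. destruct (Nat.eqb_spec j i) as [->|]; auto.
  - intros j h Hj. destruct (Nat.eqb_spec j i); [lia|auto].
Qed.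

Lemma fbar_pure_deviation e i h : fitness_hyp N n f -> in_Delta N n e -> inS N n i h ->
  fbar n f i (replace_i e i (pure h)) = f i h e.
Proof.
  intros Hf He [Hi Hh]. unfold fbar.
  assert (HR : in_Delta N n (replace_i e i (pure h)))
    by (apply replace_Delta; auto; apply pure_Delta; auto).
  rewrite (rsum_ext _ _ (fun k => if Nat.eqb k h then f i h (replace_i e i (pure h)) else 0)).
  - rewrite rsum_delta by auto. symmetry. apply fitness_own_independent; auto; [split; auto|].
    intros j k Hj. unfold replace_i. destruct (Nat.eqb_spec j i); [lia|auto].
  - intros k Hk. unfold replace_i. rewrite Nat.eqb_refl. unfold pure.
    destruct (Nat.eqb_spec k h) as [->|]; ring.
Qed.

Lemma fbar_vertex e b i : vertex e b -> (i < N)%nat -> fbar n f i e = f i (b i) e.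
Proof.
  intros [_ [Hb Hv]] Hi. unfold fbar.
  rewrite (rsum_ext _ _ (fun k => if Nat.eqb k (b i) then f i (b i) e else 0)).
  - apply rsum_delta; auto.
  - intros k Hk. rewrite Hv by (split; auto). destruct (Nat.eqb_spec k (b i)) as [->|]; ring.
Qed.

Lemma strict_nash_deviation e i h : fitness_hyp N n f -> strict_nash N n f e ->
  inS N n i h -> pure h <> e i -> f i h e < fbar n f i e.
Proof.
  intros Hf [He Hn] [Hi Hh] Hne. pose proof (Hn i Hi (pure h) (pure_Delta i h Hh) Hne).
  rewrite fbar_pure_deviation in H; auto. split; auto.
Qed.

(** A strict Nash equilibrium is pure: in each population, if no type were played
    with probability one, every type in the support would do strictly worse than
    the mean, which is absurd. *)
Lemma strict_nash_pure_row e i : fitness_hyp N n f -> strict_nash N n f e -> (i < N)%nat ->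
  exists b, (b < n i)%nat /\ forall k, (k < n i)%nat -> e i k = pure b k.
Proof.
  intros Hf Hn Hi. apply NNPP; intros Hno.
  assert (Hall : forall h, (h < n i)%nat -> f i h e < fbar n f i e).
  { intros h Hh. apply strict_nash_deviation; auto; [split; auto|].
    intros Heq. apply Hno. exists h. split; auto. intros k Hk. rewrite Heq; auto. }
  destruct Hn as [[HD _] _]. destruct (HD i Hi) as [Hp [_ Hs]].
  assert (Hsum : rsum (n i) (fun k => e i k * (fbar n f i e - f i k e)) = 0).
  { rewrite (rsum_ext _ _ (fun k => fbar n f i e * e i k - e i k * f i k e)) by (intros; ring).
    rewrite rsum_minus, rsum_scal, Hs. unfold fbar. ring. }
  assert (Hpos : exists h, (h < n i)%nat /\ 0 < e i h).
  { apply NNPP; intros Hn0. enough (rsum (n i) (e i) <= 0) by lra.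
    replace 0 with (rsum (n i) (fun _ => 0)) by (rewrite rsum_const; ring). apply rsum_le.
    intros k Hk. apply Rnot_lt_le. intros Hlt. apply Hn0. exists k; auto. }
  destruct Hpos as [h0 [Hh0 Hp0]].
  assert (Hterm : e i h0 * (fbar n f i e - f i h0 e)
                  <= rsum (n i) (fun k => e i k * (fbar n f i e - f i k e))).
  { apply (rsum_term_le _ (fun k => e i k * (fbar n f i e - f i k e))); auto.
    intros k Hk. apply Rmult_le_pos; [apply Hp; auto|]. pose proof (Hall k Hk); lra. }
  pose proof (Hall h0 Hh0). nra.
Qed.

Lemma strict_nash_vertex e : fitness_hyp N n f -> strict_nash N n f e ->
  exists b, vertex e b /\ forall i h, inS N n i h -> h <> b i -> f i h e < f i (b i) e.
Proof.
  intros Hf Hn.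
  assert (Hex : forall i, exists b, (i < N)%nat ->
                  (b < n i)%nat /\ forall k, (k < n i)%nat -> e i k = pure b k).
  { intros i. destruct (Nat.lt_ge_cases i N) as [Hi|Hi]; [|exists O; intros; lia].
    destruct (strict_nash_pure_row e i Hf Hn Hi) as [b Hb]. exists b; auto. }
  destruct (functional_choice _ Hex) as [b Hb].
  assert (Hv : vertex e b).
  { split; [apply Hn|]. split; [intros i Hi; apply Hb; auto|].
    intros i h [Hi Hh]. destruct (Hb i Hi) as [_ He']. rewrite He' by auto. reflexivity. }
  exists b. split; auto. intros i h [Hi Hh] Hne.
  rewrite <- fbar_vertex by auto. apply strict_nash_deviation; auto; [split; auto|].
  intros Heq. destruct Hv as [_ [_ Hvv]]. assert (Hh1 : pure h h = e i h) by (rewrite Heq; auto).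
  rewrite Hvv in Hh1 by (split; auto). unfold pure in Hh1. rewrite Nat.eqb_refl in Hh1.
  destruct (Nat.eqb_spec h (b i)); [lia|lra].
Qed.

Definition strict_vertex_estimates (e : pt) (b : nat -> nat) (r kap L : R) : Prop :=
  vertex e b /\ 0 < r /\ 0 < kap /\ 0 <= L /\
  (forall x y, in_Delta N n x -> in_Delta N n y -> dist N n x e < r -> dist N n y e < r ->
     forall i h, inS N n i h -> Rabs (g_fit n f i h x - g_fit n f i h y) <= L * dist N n x y) /\
  (forall x, in_Delta N n x -> dist N n x e < r ->
     forall i h, inS N n i h -> h <> b i -> g_fit n f i h x <= - kap).

Lemma fbar_lipschitz i x y F B : in_Delta N n y -> (i < N)%nat -> 0 <= F -> 0 <= B ->
  (forall k, (k < n i)%nat -> Rabs (f i k x) <= F) ->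
  (forall k, (k < n i)%nat -> Rabs (f i k x - f i k y) <= B * dist N n x y) ->
  Rabs (fbar n f i x - fbar n f i y) <= F * dist N n x y + INR (n i) * B * dist N n x y.
Proof.
  intros Hy Hi HF0 HB HF HL. unfold fbar. rewrite <- rsum_minus.
  eapply Rle_trans; [apply rsum_abs|].
  apply Rle_trans with (rsum (n i) (fun k => F * Rabs (x i k - y i k) + B * dist N n x y)).
  - apply rsum_le. intros k Hk.
    replace (x i k * f i k x - y i k * f i k y)
      with ((x i k - y i k) * f i k x + y i k * (f i k x - f i k y)) by ring.
    eapply Rle_trans; [apply Rabs_triang|]. rewrite !Rabs_mult.
    pose proof (Delta_coord y i k Hy (conj Hi Hk)).
    rewrite (Rabs_pos_eq (y i k)) by lra.
    pose proof (HF k Hk). pose proof (HL k Hk).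
    pose proof (Rabs_pos (x i k - y i k)). pose proof (Rabs_pos (f i k x - f i k y)). nra.
  - rewrite rsum_plus, rsum_scal, rsum_const.
    pose proof (row_le_dist x y i Hi). pose proof (dist_nonneg x y).
    assert (F * rsum (n i) (fun k => Rabs (x i k - y i k)) <= F * dist N n x y)
      by (apply Rmult_le_compat_l; auto). lra.
Qed.

Lemma g_fit_lipschitz e : fitness_hyp N n f -> in_Delta N n e ->
  exists r L, 0 < r /\ 0 <= L /\
    forall x y, in_Delta N n x -> in_Delta N n y -> dist N n x e < r -> dist N n y e < r ->
      forall i h, inS N n i h -> Rabs (g_fit n f i h x - g_fit n f i h y) <= L * dist N n x y.
Proof.
  intros Hf He. destruct (fitness_lipschitz e Hf He) as [r [B0 [Hr Hlip0]]].
  set (B := Rmax B0 0). assert (HB : 0 <= B) by apply Rmax_r.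
  assert (Hlip : forall i h x y, inS N n i h -> dist N n x e < r -> dist N n y e < r ->
                   Rabs (f i h x - f i h y) <= B * dist N n x y).
  { intros i h x y Hs Hx Hy. destruct (Hlip0 i h Hs) as [_ H]. eapply Rle_trans; [apply H; auto|].
    apply Rmult_le_compat_r; [apply dist_nonneg | apply Rmax_l]. }
  set (F := sumS (fun i h => Rabs (f i h e)) + B * r).
  assert (HF0 : 0 <= F) by (pose proof (sumS_nonneg (fun i h => Rabs (f i h e))
                                          ltac:(intros; apply Rabs_pos)); unfold F; nra).
  assert (Hbound : forall i h x, inS N n i h -> dist N n x e < r -> Rabs (f i h x) <= F).
  { intros i h x Hs Hx. pose proof (Hlip i h x e Hs Hx ltac:(rewrite dist_self; lra)).
    assert (Rabs (f i h e) <= sumS (fun i h => Rabs (f i h e)))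
      by (apply (sumS_term_le (fun i h => Rabs (f i h e))); auto; intros; apply Rabs_pos).
    pose proof (Rabs_triang_inv (f i h x) (f i h e)).
    assert (B * dist N n x e <= B * r) by (apply Rmult_le_compat_l; lra). unfold F. lra. }
  set (nT := rsum N (fun i => INR (n i))).
  exists r, (B + F + nT * B). split; auto. split.
  { assert (0 <= nT) by (apply rsum_nonneg; intros; apply pos_INR). nra. }
  intros x y Hx Hy Hxe Hye i h Hs. pose proof Hs as [Hi Hh]. unfold g_fit.
  replace (f i h x - fbar n f i x - (f i h y - fbar n f i y))
    with ((f i h x - f i h y) - (fbar n f i x - fbar n f i y)) by ring.
  eapply Rle_trans; [apply Rabs_triang|]. rewrite Rabs_Ropp.
  pose proof (fbar_lipschitz i x y F B Hy Hi HF0 HB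
                (fun k Hk => Hbound i k x (conj Hi Hk) Hxe)
                (fun k Hk => Hlip i k x y (conj Hi Hk) Hxe Hye)).
  pose proof (Hlip i h x y Hs Hxe Hye). pose proof (dist_nonneg x y).
  assert (INR (n i) <= nT) by (apply (rsum_term_le N (fun i => INR (n i))); auto; intros; apply pos_INR).
  assert (INR (n i) * B * dist N n x y <= nT * B * dist N n x y)
    by (apply Rmult_le_compat_r; auto; apply Rmult_le_compat_r; auto). nra.
Qed.

Lemma strict_nash_estimates e : fitness_hyp N n f -> strict_nash N n f e ->
  exists b r kap L, strict_vertex_estimates e b r kap L.
Proof.
  intros Hf Hn. destruct (strict_nash_vertex e Hf Hn) as [b [Hv Hgap]].
  pose proof Hv as [He [Hb _]].
  destruct (g_fit_lipschitz e Hf He) as [r1 [L [Hr1 [HL Hlip]]]].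
  (* a uniform gap [2 kap] at [e] itself *)
  destruct (finS_choice (fun i h k _ => h <> b i -> g_fit n f i h e <= - 2 * k))
    as [kap [_ [Hkap Hgap2]]].
  { intros i h k k' B1 B1' H Hk' _ Hne. specialize (H Hne). lra. }
  { intros i h Hs. destruct (Nat.eq_dec h (b i)) as [Heq|Hne].
    - exists 1, 0. split; [lra | intros; contradiction].
    - exists ((f i (b i) e - f i h e) / 2), 0. pose proof (Hgap i h Hs Hne). split; [lra|].
      intros _. unfold g_fit. rewrite (fbar_vertex e b) by (auto; destruct Hs; auto). lra. }
  (* the gap shrinks by at most [L * dist] on the ball, so shrink the radius to [kap / (L + 1)] *)
  set (r := Rmin r1 (kap / (L + 1))).
  assert (Hr : 0 < r) by (apply Rmin_pos; auto; apply Rdiv_lt_0_compat; lra).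
  assert (Hrr1 : r <= r1) by apply Rmin_l.
  assert (HLr : L * r <= kap).
  { apply Rle_trans with (L * (kap / (L + 1))); [apply Rmult_le_compat_l; auto; apply Rmin_r|].
    replace (L * (kap / (L + 1))) with (kap - kap / (L + 1)) by (field; lra).
    assert (0 < kap / (L + 1)) by (apply Rdiv_lt_0_compat; lra). lra. }
  exists b, r, kap, L. split; auto. split; auto. split; auto. split; auto. split.
  - intros x y Hx Hy Hxe Hye. apply Hlip; auto; lra.
  - intros x Hx Hxe i h Hs Hne.
    pose proof (Hlip x e Hx He ltac:(lra) ltac:(rewrite dist_self; lra) i h Hs).
    pose proof (Hgap2 i h Hs Hne).
    assert (L * dist N n x e <= L * r) by (apply Rmult_le_compat_l; lra).
    pose proof (Rle_abs (g_fit n f i h x - g_fit n f i h e)). lra.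
Qed.

(** ** Existence of mutation equilibria near a strict vertex *)

Lemma phi_row_sum M c x i : in_Delta N n x -> in_Delta N n c -> (i < N)%nat ->
  rsum (n i) (phi n f M c x i) = 0.
Proof.
  intros [Hx _] [Hc _] Hi. destruct (Hx i Hi) as [_ [_ Sx]]. destruct (Hc i Hi) as [_ [_ Sc]].
  unfold phi, g_fit. rewrite rsum_plus.
  rewrite (rsum_ext _ (fun h => x i h * (f i h x - fbar n f i x))
             (fun h => x i h * f i h x - fbar n f i x * x i h)) by (intros; ring).
  rewrite rsum_minus, rsum_scal, rsum_scal, rsum_minus, Sx, Sc. unfold fbar. ring.
Qed.

Section MutationMap.
Variables (e : pt) (b : nat -> nat) (r kap L : R) (c : pt) (M : R).
Hypothesis Hv : vertex e b.
Hypothesis Hr : 0 < r.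
Hypothesis Hk : 0 < kap.
Hypothesis HL : 0 <= L.
Hypothesis Hlip : forall x y, in_Delta N n x -> in_Delta N n y -> dist N n x e < r -> dist N n y e < r ->
  forall i h, inS N n i h -> Rabs (g_fit n f i h x - g_fit n f i h y) <= L * dist N n x y.
Hypothesis Hneg : forall x, in_Delta N n x -> dist N n x e < r ->
  forall i h, inS N n i h -> h <> b i -> g_fit n f i h x <= - kap.
Hypothesis Hc : in_int_Delta N n c.
Hypothesis HM : 0 < M.
Hypothesis HMk : M <= kap.
Hypothesis HMr : 2 * INR N / kap * M <= r / 2.
Hypothesis HMq : 2 * M * L * INR N / (kap * kap) <= / 2.

(** For a non-selected type, [phi^M x = 0] means [x = M c / (M - g(x))]; the
    selected type takes the remaining mass.  Mutation equilibria near [e] are the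
    fixed points of the resulting map. *)
Definition mut_value (x : pt) (i h : nat) : R := M * c i h / (M - g_fit n f i h x).

Definition mut_map (x : pt) : pt := fun i h =>
  if Nat.ltb i N then if Nat.ltb h (n i) then
    if Nat.eqb h (b i) then 1 - rsum (n i) (fun k => if Nat.eqb k (b i) then 0 else mut_value x i k)
    else mut_value x i h
  else 0 else 0.

Definition near_e (x : pt) : Prop := in_Delta N n x /\ dist N n x e < r.

Lemma c_bounds i h : inS N n i h -> 0 < c i h <= 1.
Proof. intros Hs. destruct Hc as [Hc1 Hc2]. split; [apply Hc2; auto | apply (Delta_coord c i h Hc1 Hs)]. Qed.

Lemma mut_value_bounds x i h : near_e x -> inS N n i h -> h <> b i ->
  0 < mut_value x i h <= M / kap * c i h.
Proof.
  intros [Hx Hxe] Hs Hne. pose proof (Hneg x Hx Hxe i h Hs Hne). pose proof (c_bounds i h Hs).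
  unfold mut_value. split; [apply Rdiv_lt_0_compat; nra|].
  replace (M / kap * c i h) with (M * c i h * / kap) by (field; lra).
  unfold Rdiv. apply Rmult_le_compat_l; [nra|]. apply Rinv_le_contravar; lra.
Qed.

Lemma mut_value_lipschitz x y i h : near_e x -> near_e y -> inS N n i h -> h <> b i ->
  Rabs (mut_value x i h - mut_value y i h) <= M * L / (kap * kap) * c i h * dist N n x y.
Proof.
  intros [Hx Hxe] [Hy Hye] Hs Hne.
  pose proof (Hneg x Hx Hxe i h Hs Hne). pose proof (Hneg y Hy Hye i h Hs Hne).
  pose proof (Hlip x y Hx Hy Hxe Hye i h Hs). pose proof (c_bounds i h Hs).
  set (gx := g_fit n f i h x) in *. set (gy := g_fit n f i h y) in *. unfold mut_value. fold gx gy.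
  replace (M * c i h / (M - gx) - M * c i h / (M - gy))
    with (M * c i h * (gx - gy) * / ((M - gx) * (M - gy))) by (field; lra).
  rewrite !Rabs_mult, (Rabs_pos_eq M), (Rabs_pos_eq (c i h)) by lra.
  rewrite Rabs_inv, (Rabs_pos_eq ((M - gx) * (M - gy))) by nra.
  assert (/ ((M - gx) * (M - gy)) <= / (kap * kap)) by (apply Rinv_le_contravar; nra).
  assert (0 <= / ((M - gx) * (M - gy))) by (left; apply Rinv_0_lt_compat; nra).
  assert (0 < / (kap * kap)) by (apply Rinv_0_lt_compat; nra).
  pose proof (Rabs_pos (gx - gy)). pose proof (dist_nonneg x y).
  apply Rle_trans with (M * c i h * (L * dist N n x y) * / (kap * kap)).
  - assert (0 <= M * c i h) by nra.
    apply Rmult_le_compat; auto; [apply Rmult_le_pos; auto | apply Rmult_le_compat_l; auto].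
  - right. field. lra.
Qed.

Lemma mut_map_off x i h : inS N n i h -> h <> b i -> mut_map x i h = mut_value x i h.
Proof.
  intros [Hi Hh] Hne. unfold mut_map. apply Nat.ltb_lt in Hi, Hh. rewrite Hi, Hh.
  destruct (Nat.eqb_spec h (b i)); [lia|auto].
Qed.

Lemma mut_map_selected x i : (i < N)%nat -> mut_map x i (b i) =
  1 - rsum (n i) (fun k => if Nat.eqb k (b i) then 0 else mut_value x i k).
Proof.
  intros Hi. destruct Hv as [_ [Hb _]]. unfold mut_map.
  rewrite (proj2 (Nat.ltb_lt _ _) Hi), (proj2 (Nat.ltb_lt _ _) (Hb i Hi)), Nat.eqb_refl. auto.
Qed.

Lemma mut_value_row_sum x i : near_e x -> (i < N)%nat ->
  rsum (n i) (fun k => if Nat.eqb k (b i) then 0 else mut_value x i k) <= M / kap.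
Proof.
  intros Hx Hi. destruct Hc as [[HD _] _]. destruct (HD i Hi) as [_ [_ Hs]].
  apply Rle_trans with (rsum (n i) (fun k => M / kap * c i k)).
  - apply rsum_le. intros k Hk0. pose proof (c_bounds i k (conj Hi Hk0)).
    assert (0 < M / kap) by (apply Rdiv_lt_0_compat; lra).
    destruct (Nat.eqb_spec k (b i)); [nra|]. apply mut_value_bounds; auto. split; auto.
  - rewrite rsum_scal, Hs. lra.
Qed.

Lemma mut_map_Delta x : near_e x -> in_Delta N n (mut_map x).
Proof.
  intros Hx. destruct Hv as [He [Hb _]]. split.
  - intros i Hi. split; [|split].
    + intros h Hh. destruct (Nat.eq_dec h (b i)) as [->|Hne].
      * rewrite mut_map_selected by auto. pose proof (mut_value_row_sum x i Hx Hi).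
        assert (M / kap <= 1).
        { unfold Rdiv. apply (Rmult_le_reg_r kap); auto. rewrite Rmult_assoc, Rinv_l by lra. lra. }
        lra.
      * rewrite mut_map_off by (auto; split; auto). left. apply mut_value_bounds; auto. split; auto.
    + intros h Hh. unfold mut_map. rewrite (proj2 (Nat.ltb_lt _ _) Hi).
      destruct (Nat.ltb_spec h (n i)); [lia|auto].
    + rewrite (rsum_split _ _ (b i) (Hb i Hi)), mut_map_selected by auto.
      rewrite (rsum_ext _ (fun k => if Nat.eqb k (b i) then 0 else mut_map x i k)
                 (fun k => if Nat.eqb k (b i) then 0 else mut_value x i k)); [ring|].
      intros k Hk0. destruct (Nat.eqb_spec k (b i)); auto. apply mut_map_off; auto. split; auto.
  - intros i h Hi. unfold mut_map. destruct (Nat.ltb_spec i N); [lia|auto].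
Qed.

Lemma mut_map_dist x : near_e x -> dist N n (mut_map x) e <= 2 * INR N / kap * M.
Proof.
  intros Hx. rewrite (dist_to_vertex e b (mut_map x) Hv (mut_map_Delta x Hx)).
  apply Rle_trans with (2 * sumS (fun i h => M / kap * c i h)).
  - apply Rmult_le_compat_l; [lra|]. apply sumS_le. intros i h Hs. unfold off.
    pose proof (c_bounds i h Hs). assert (0 < M / kap) by (apply Rdiv_lt_0_compat; lra).
    destruct (Nat.eqb_spec h (b i)); [nra|]. rewrite mut_map_off by auto. apply mut_value_bounds; auto.
  - rewrite sumS_scal, sumS_Delta by (destruct Hc; auto). right; field; lra.
Qed.

Lemma mut_map_contraction x y : near_e x -> near_e y ->
  dist N n (mut_map x) (mut_map y) <= / 2 * dist N n x y.
Proof.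
  intros Hx Hy. destruct Hv as [_ [Hb _]].
  eapply Rle_trans; [apply (dist_le_off b); auto; apply mut_map_Delta; auto|].
  set (q := M * L / (kap * kap)).
  assert (Hq : 0 <= q) by (apply Rmult_le_pos; [nra|left; apply Rinv_0_lt_compat; nra]).
  pose proof (dist_nonneg x y).
  apply Rle_trans with (2 * sumS (fun i h => q * dist N n x y * c i h)).
  - apply Rmult_le_compat_l; [lra|]. apply sumS_le. intros i h Hs. unfold off.
    pose proof (c_bounds i h Hs). assert (0 <= q * dist N n x y) by nra.
    destruct (Nat.eqb_spec h (b i)); [nra|].
    rewrite !mut_map_off by auto. eapply Rle_trans; [apply mut_value_lipschitz; auto|]. right; unfold q; ring.
  - rewrite sumS_scal, sumS_Delta by (destruct Hc; auto).
    replace (2 * (q * dist N n x y * INR N)) with ((2 * M * L * INR N / (kap * kap)) * dist N n x y)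
      by (unfold q; field; lra).
    apply Rmult_le_compat_r; auto.
Qed.

(** A fixed point of the map is a mutation equilibrium: the non-selected
    equations hold by construction, the selected one since rows of [phi] sum to 0. *)
Lemma mut_map_fixed_rest_point x : near_e x -> (forall i h, inS N n i h -> mut_map x i h = x i h) ->
  forall i h, inS N n i h -> phi n f M c x i h = 0.
Proof.
  intros [Hx Hxe] Hfix. destruct Hv as [_ [Hb _]].
  assert (Hoff : forall i h, inS N n i h -> h <> b i -> phi n f M c x i h = 0).
  { intros i h Hs Hne. pose proof (Hneg x Hx Hxe i h Hs Hne).
    unfold phi. rewrite <- (Hfix i h Hs), mut_map_off by auto. unfold mut_value. field. lra. }
  intros i h Hs. destruct (Nat.eq_dec h (b i)) as [->|]; auto.
  destruct Hs as [Hi _]. pose proof (phi_row_sum M c x i Hx (proj1 Hc) Hi) as Hrow.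
  rewrite (rsum_split _ _ (b i) (Hb i Hi)) in Hrow.
  rewrite (rsum_ext _ _ (fun _ => 0)), rsum_const in Hrow; [lra|].
  intros k Hk0. destruct (Nat.eqb_spec k (b i)); auto. apply Hoff; auto. split; auto.
Qed.

Lemma mutation_equilibrium_exists : exists x, in_Delta N n x /\
  (forall i h, inS N n i h -> phi n f M c x i h = 0) /\ dist N n x e <= 2 * INR N / kap * M.
Proof.
  set (C := 2 * INR N / kap * M).
  assert (HC : 0 <= C).
  { apply Rmult_le_pos; [|lra]. apply Rmult_le_pos; [pose proof (pos_INR N); lra|].
    left; apply Rinv_0_lt_compat; lra. }
  assert (Hnear : forall x, in_Delta N n x -> dist N n x e <= C -> near_e x)
    by (intros x Hx Hxe; split; auto; unfold C in *; lra).
  destruct (contraction_fixed_point mut_map e C HC (proj1 Hv)) as [x [Hx [Hxe Hfix]]].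
  - intros x Hx Hxe. split; [apply mut_map_Delta | apply mut_map_dist]; auto.
  - intros x y Hx Hxe Hy Hye. apply mut_map_contraction; auto.
  - exists x. split; auto. split; auto. apply mut_map_fixed_rest_point; auto.
Qed.

End MutationMap.

Lemma mutation_equilibria_near_vertex e b r kap L c :
  strict_vertex_estimates e b r kap L -> in_int_Delta N n c ->
  exists M0 C, 0 < M0 /\ 0 <= C /\ forall M, 0 < M <= M0 ->
    exists x, in_Delta N n x /\ (forall i h, inS N n i h -> phi n f M c x i h = 0) /\
      dist N n x e <= C * M.
Proof.
  intros [Hv [Hr [Hk [HL [Hlip Hneg]]]]] Hc.
  pose proof (pos_INR N) as HN.
  assert (Ha1 : 0 <= 2 * INR N / kap) by (apply Rmult_le_pos; [lra|left; apply Rinv_0_lt_compat; lra]).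
  assert (Ha2 : 0 <= 2 * L * INR N / (kap * kap))
    by (apply Rmult_le_pos; [nra|left; apply Rinv_0_lt_compat; nra]).
  destruct (linear_small 1 kap ltac:(lra) Hk) as [d1 [Hd1 H1]].
  destruct (linear_small _ (r / 2) Ha1 ltac:(lra)) as [d2 [Hd2 H2]].
  destruct (linear_small _ (/ 2) Ha2 ltac:(lra)) as [d3 [Hd3 H3]].
  exists (Rmin d1 (Rmin d2 d3)), (2 * INR N / kap).
  split; [repeat apply Rmin_pos; auto|]. split; auto.
  intros M [HM HMd]. pose proof (Rmin_l d1 (Rmin d2 d3)). pose proof (Rmin_r d1 (Rmin d2 d3)).
  pose proof (Rmin_l d2 d3). pose proof (Rmin_r d2 d3).
  apply (mutation_equilibrium_exists e b r kap L c M); auto.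
  - specialize (H1 M ltac:(lra)). lra.
  - apply H2. lra.
  - replace (2 * M * L * INR N / (kap * kap)) with (2 * L * INR N / (kap * kap) * M) by (field; lra).
    apply H3. lra.
Qed.

(** ** Asymptotic stability of mutation equilibria near a strict vertex *)

(** Mutation equilibria closer than [stab_radius r kap L] to the vertex are
    asymptotically stable. *)
Definition stab_radius (r kap L : R) : R := Rmin (r / 2) (kap / (4 * L * cs_const + 1)).

Lemma stab_radius_pos r kap L : 0 < r -> 0 < kap -> 0 <= L -> 0 < stab_radius r kap L.
Proof.
  intros Hr Hk HL. pose proof cs_const_nonneg. apply Rmin_pos; [lra|].
  apply Rdiv_lt_0_compat; nra.
Qed.

Section Stability.
Variables (e : pt) (b : nat -> nat) (r kap L : R) (c : pt) (M : R) (x : pt).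
Hypothesis Hv : vertex e b.
Hypothesis Hr : 0 < r.
Hypothesis Hk : 0 < kap.
Hypothesis HL : 0 <= L.
Hypothesis Hlip : forall x y, in_Delta N n x -> in_Delta N n y -> dist N n x e < r -> dist N n y e < r ->
  forall i h, inS N n i h -> Rabs (g_fit n f i h x - g_fit n f i h y) <= L * dist N n x y.
Hypothesis Hneg : forall x, in_Delta N n x -> dist N n x e < r ->
  forall i h, inS N n i h -> h <> b i -> g_fit n f i h x <= - kap.
Hypothesis HM : 0 < M.
Hypothesis Hx : in_Delta N n x.
Hypothesis Hrest : forall i h, inS N n i h -> phi n f M c x i h = 0.
Hypothesis Hxe : dist N n x e < stab_radius r kap L.

Definition lyap (w : pt) : R := sumS (off b (fun i h => (w i h - x i h) * (w i h - x i h))).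
Definition off_dev (w : pt) : R := sumS (off b (fun i h => Rabs (w i h - x i h))).

Lemma stab_radius_le : stab_radius r kap L <= r / 2.
Proof. apply Rmin_l. Qed.

Lemma stab_radius_gap : 4 * stab_radius r kap L * L * cs_const <= kap.
Proof.
  pose proof cs_const_nonneg. pose proof (stab_radius_pos r kap L Hr Hk HL).
  pose proof (Rmin_r (r / 2) (kap / (4 * L * cs_const + 1))). fold (stab_radius r kap L) in H1.
  apply Rle_trans with (4 * L * cs_const * (kap / (4 * L * cs_const + 1))).
  - replace (4 * stab_radius r kap L * L * cs_const) with (4 * L * cs_const * stab_radius r kap L)
      by ring. apply Rmult_le_compat_l; nra.
  - replace (4 * L * cs_const * (kap / (4 * L * cs_const + 1)))
      with (kap - kap / (4 * L * cs_const + 1)) by (field; nra).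
    assert (0 < kap / (4 * L * cs_const + 1)) by (apply Rdiv_lt_0_compat; nra). lra.
Qed.

Lemma lyap_nonneg w : 0 <= lyap w.
Proof. apply off_nonneg. intros; apply Rle_0_sqr. Qed.

Lemma off_dev_nonneg w : 0 <= off_dev w.
Proof. apply off_nonneg. intros; apply Rabs_pos. Qed.

Lemma off_dev_sq w : off_dev w ^ 2 <= cs_const * lyap w.
Proof.
  eapply Rle_trans; [apply sumS_cauchy_schwarz|]. right. f_equal. apply sumS_ext.
  intros i h _. unfold off. destruct (Nat.eqb h (b i)); [ring|].
  rewrite RPow_abs, Rabs_pos_eq by apply pow2_ge_0. ring.
Qed.

Lemma dist_sq_le_lyap w : in_Delta N n w -> dist N n w x ^ 2 <= 4 * cs_const * lyap w.
Proof.
  intros Hw. pose proof (dist_le_off b w x (proj1 (proj2 Hv)) Hw Hx). fold (off_dev w) in H.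
  pose proof (off_dev_sq w). pose proof (dist_nonneg w x).
  assert (dist N n w x ^ 2 <= (2 * off_dev w) ^ 2) by (apply pow_incr; lra). nra.
Qed.

Lemma lyap_le_dist_sq w : lyap w <= dist N n w x ^ 2.
Proof.
  apply Rle_trans with (sumS (fun i h => dist N n w x * Rabs (w i h - x i h))).
  - apply sumS_le. intros i h Hs. unfold off. pose proof (Rabs_pos (w i h - x i h)).
    destruct (Nat.eqb h (b i)); [pose proof (dist_nonneg w x); nra|].
    rewrite <- (Rabs_pos_eq ((w i h - x i h) * (w i h - x i h))) by apply Rle_0_sqr.
    rewrite Rabs_mult. apply Rmult_le_compat_r; auto. apply coord_le_dist; auto.
  - rewrite sumS_scal. right. simpl. rewrite Rmult_1_r. reflexivity.
Qed.

Lemma lyap_lipschitz w w' : in_Delta N n w -> in_Delta N n w' ->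
  Rabs (lyap w - lyap w') <= 2 * dist N n w w'.
Proof.
  intros Hw Hw'. unfold lyap. rewrite <- sumS_minus. eapply Rle_trans; [apply sumS_abs|].
  unfold dist. fold (sumS (fun i h => Rabs (w i h - w' i h))). rewrite <- sumS_scal.
  apply sumS_le. intros i h Hs. unfold off. pose proof (Rabs_pos (w i h - w' i h)).
  destruct (Nat.eqb h (b i)); [rewrite Rminus_0_r, Rabs_R0; lra|].
  pose proof (Delta_coord w i h Hw Hs). pose proof (Delta_coord w' i h Hw' Hs).
  pose proof (Delta_coord x i h Hx Hs).
  replace ((w i h - x i h) * (w i h - x i h) - (w' i h - x i h) * (w' i h - x i h))
    with ((w i h - w' i h) * (w i h + w' i h - 2 * x i h)) by ring.
  rewrite Rabs_mult, Rmult_comm. apply Rmult_le_compat_r; auto. apply Rabs_le. lra.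
Qed.

(** A sublevel of [lyap] that stays inside the ball where the estimates hold. *)
Definition basin_level : R := r * r / (16 * cs_const + 16).

Lemma basin_level_pos : 0 < basin_level.
Proof. pose proof cs_const_nonneg. apply Rdiv_lt_0_compat; nra. Qed.

Lemma basin_in_ball w : in_Delta N n w -> lyap w < basin_level -> dist N n w e < r.
Proof.
  intros Hw HV. pose proof (dist_sq_le_lyap w Hw). pose proof cs_const_nonneg.
  pose proof (lyap_nonneg w).
  assert (dist N n w x ^ 2 < (r / 2) ^ 2).
  { assert (4 * cs_const * lyap w <= 4 * cs_const * basin_level) by (apply Rmult_le_compat_l; lra).
    assert (4 * cs_const * basin_level < (r / 2) ^ 2); [|lra].
    unfold basin_level. replace (4 * cs_const * (r * r / (16 * cs_const + 16)))
      with ((r / 2) ^ 2 - 4 * (r * r) / (16 * cs_const + 16)) by (field; lra).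
    assert (0 < 4 * (r * r) / (16 * cs_const + 16)) by (apply Rdiv_lt_0_compat; nra). lra. }
  apply lt_of_sq_lt in H2; [|lra].
  pose proof (dist_tri w x e). pose proof stab_radius_le. lra.
Qed.

(** Pointwise, [2 (w - x) phi(w)] is at most [- 2 kap (w - x)^2] plus a cross term:
    this uses [phi(x) = 0], the gap [g <= - kap] and the Lipschitz bound on [g],
    together with [x_{ih} <= dist x e] off the selected types. *)
Lemma lyap_rate_pointwise w i h : in_Delta N n w -> dist N n w e < r -> inS N n i h -> h <> b i ->
  2 * (w i h - x i h) * phi n f M c w i h <=
  - 2 * kap * ((w i h - x i h) * (w i h - x i h))
  + 2 * stab_radius r kap L * L * dist N n w x * Rabs (w i h - x i h).
Proof.
  intros Hw Hwe Hs Hne.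
  assert (Hxr : dist N n x e < r) by (pose proof stab_radius_le; lra).
  pose proof (Hneg w Hw Hwe i h Hs Hne) as Hgw.
  pose proof (Hlip w x Hw Hx Hwe Hxr i h Hs) as Hl.
  pose proof (Hrest i h Hs) as Hx0. unfold phi in *.
  assert (Hxih : x i h <= stab_radius r kap L).
  { destruct Hv as [_ [_ Hvv]]. pose proof (coord_le_dist x e i h Hs) as Hc.
    rewrite Hvv in Hc by auto. destruct (Nat.eqb_spec h (b i)); [lia|].
    rewrite Rminus_0_r, Rabs_pos_eq in Hc by (apply (Delta_coord x i h Hx Hs)). lra. }
  pose proof (Delta_coord x i h Hx Hs) as [Hx0' _].
  set (a := w i h - x i h) in *. set (gw := g_fit n f i h w) in *. set (gx := g_fit n f i h x) in *.
  replace (2 * a * (w i h * gw + M * (c i h - w i h)))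
    with (2 * a * a * (gw - M) + 2 * a * x i h * (gw - gx))
    by (unfold a; replace (M * (c i h - w i h)) with (- (x i h * gx) - M * (w i h - x i h)) by lra; ring).
  assert (2 * a * a * (gw - M) <= - 2 * kap * (a * a)) by nra.
  assert (2 * a * x i h * (gw - gx) <= 2 * Rabs a * x i h * Rabs (gw - gx)).
  { pose proof (Rle_abs (2 * a * x i h * (gw - gx))).
    rewrite !Rabs_mult, (Rabs_pos_eq 2), (Rabs_pos_eq (x i h)) in H0 by lra. lra. }
  pose proof (Rabs_pos a). pose proof (Rabs_pos (gw - gx)). pose proof (dist_nonneg w x).
  assert (x i h * Rabs (gw - gx) <= stab_radius r kap L * (L * dist N n w x))
    by (apply Rmult_le_compat; lra). nra.
Qed.

(** Summed, the cross terms are absorbed: [lyap] decays at rate [kap] near [e]. *)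
Lemma lyap_rate w : in_Delta N n w -> dist N n w e < r ->
  sumS (off b (fun i h => 2 * (w i h - x i h) * phi n f M c w i h)) <= - kap * lyap w.
Proof.
  intros Hw Hwe. set (rho := stab_radius r kap L). set (d := dist N n w x).
  eapply Rle_trans.
  { apply sumS_le with (H := fun i h => - 2 * kap * off b (fun i h => (w i h - x i h) * (w i h - x i h)) i h
                                        + 2 * rho * L * d * off b (fun i h => Rabs (w i h - x i h)) i h).
    intros i h Hs. unfold off. destruct (Nat.eqb_spec h (b i)); [lra|].
    apply lyap_rate_pointwise; auto. }
  rewrite sumS_plus, !sumS_scal. fold (lyap w) (off_dev w).
  pose proof (dist_le_off b w x (proj1 (proj2 Hv)) Hw Hx). fold (off_dev w) in H. fold d in H.
  pose proof (off_dev_sq w). pose proof stab_radius_gap. pose proof (stab_radius_pos r kap L Hr Hk HL).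
  pose proof (lyap_nonneg w). pose proof cs_const_nonneg. pose proof (off_dev_nonneg w).
  fold rho in H1, H2.
  assert (2 * rho * L * d * off_dev w <= 4 * rho * L * off_dev w ^ 2).
  { assert (d * off_dev w <= 2 * off_dev w * off_dev w) by (apply Rmult_le_compat_r; auto).
    assert (0 <= 2 * rho * L) by nra. simpl. nra. }
  assert (4 * rho * L * off_dev w ^ 2 <= 4 * rho * L * (cs_const * lyap w))
    by (apply Rmult_le_compat_l; nra).
  assert (4 * rho * L * (cs_const * lyap w) <= kap * lyap w)
    by (replace (4 * rho * L * (cs_const * lyap w)) with ((4 * rho * L * cs_const) * lyap w) by ring;
        apply Rmult_le_compat_r; auto).
  lra.
Qed.

Lemma lyap_along_solution z : solution_in_Delta N n (phi n f M c) z -> lyap (z 0) < basin_level ->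
  (forall t, 0 <= t -> lyap (z t) <= lyap (z 0)) /\
  (forall eta, 0 < eta -> exists T, forall t, T <= t -> lyap (z t) < eta).
Proof.
  intros [HzD [Hzd Hz0]] HV0.
  apply (lyapunov_decay (fun t => lyap (z t))
           (fun t => sumS (off b (fun i h => 2 * (z t i h - x i h) * phi n f M c (z t) i h))))
    with (rho := basin_level) (kap := kap); auto.
  - intros t Ht. apply (derive_sumS (fun t => off b (fun i h => (z t i h - x i h) * (z t i h - x i h)))).
    intros i h Hs. unfold off. destruct (Nat.eqb h (b i)); [apply (derivable_pt_lim_const 0)|].
    assert (Hd : derivable_pt_lim (fun s => z s i h - x i h) t (phi n f M c (z t) i h))
      by (replace (phi n f M c (z t) i h) with (phi n f M c (z t) i h - 0) by ring;
          apply (derivable_pt_lim_minus (fun s => z s i h) (fun _ => x i h)); auto;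
          apply (derivable_pt_lim_const (x i h))).
    replace (2 * (z t i h - x i h) * phi n f M c (z t) i h)
      with (phi n f M c (z t) i h * (z t i h - x i h) + (z t i h - x i h) * phi n f M c (z t) i h)
      by ring.
    apply (derivable_pt_lim_mult (fun s => z s i h - x i h) (fun s => z s i h - x i h)); auto.
  - intros eps Heps. destruct (Hz0 (eps / 2) ltac:(lra)) as [d [Hd Hdd]]. exists d. split; auto.
    intros t Ht. pose proof (lyap_lipschitz (z t) (z 0) (HzD t ltac:(lra)) (HzD 0 ltac:(lra))).
    pose proof (Hdd t Ht). lra.
  - intros t Ht. apply lyap_nonneg.
  - intros t Ht HV. apply lyap_rate; [apply HzD; lra|]. apply basin_in_ball; auto. apply HzD; lra.
Qed.

Lemma lyap_lt_of_dist_lt w d : 0 < d <= 1 -> dist N n w x < d -> lyap w < d.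
Proof.
  intros Hd Hw. pose proof (lyap_le_dist_sq w). pose proof (dist_nonneg w x).
  simpl in *. nra.
Qed.

Lemma dist_lt_of_lyap_lt w eps : in_Delta N n w -> 0 < eps ->
  lyap w < eps ^ 2 / (4 * cs_const + 1) -> dist N n w x < eps.
Proof.
  intros Hw Heps HV. pose proof (dist_sq_le_lyap w Hw). pose proof cs_const_nonneg.
  apply lt_of_sq_lt; [lra|]. apply Rle_lt_trans with (4 * cs_const * (eps ^ 2 / (4 * cs_const + 1))).
  - assert (4 * cs_const * lyap w <= 4 * cs_const * (eps ^ 2 / (4 * cs_const + 1)))
      by (apply Rmult_le_compat_l; lra). lra.
  - replace (4 * cs_const * (eps ^ 2 / (4 * cs_const + 1)))
      with (eps ^ 2 - eps ^ 2 / (4 * cs_const + 1)) by (field; lra).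
    assert (0 < eps ^ 2 / (4 * cs_const + 1)) by (apply Rdiv_lt_0_compat; nra). lra.
Qed.

Lemma rest_point_asympt_stable : asympt_stable N n (phi n f M c) x.
Proof.
  pose proof cs_const_nonneg. pose proof basin_level_pos. split.
  - intros eps Heps. set (target := eps ^ 2 / (4 * cs_const + 1)).
    assert (Ht : 0 < target) by (apply Rdiv_lt_0_compat; nra).
    set (d := Rmin 1 (Rmin basin_level target)).
    assert (Hd : 0 < d) by (unfold d; repeat apply Rmin_pos; lra).
    assert (Hd1 : d <= 1) by apply Rmin_l.
    assert (Hd2 : d <= basin_level) by (eapply Rle_trans; [apply Rmin_r | apply Rmin_l]).
    assert (Hd3 : d <= target) by (eapply Rle_trans; [apply Rmin_r | apply Rmin_r]).
    exists d. split; auto. intros z Hz Hz0 t Ht0.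
    pose proof (lyap_lt_of_dist_lt (z 0) d ltac:(lra) Hz0).
    destruct (lyap_along_solution z Hz ltac:(lra)) as [Hmono _].
    apply dist_lt_of_lyap_lt; auto; [apply Hz; auto|]. pose proof (Hmono t Ht0). fold target. lra.
  - set (eta := Rmin 1 basin_level).
    assert (Heta : 0 < eta) by (apply Rmin_pos; lra).
    assert (Heta1 : eta <= 1) by apply Rmin_l.
    assert (Heta2 : eta <= basin_level) by apply Rmin_r.
    exists eta. split; auto. intros z Hz Hz0 eps Heps.
    pose proof (lyap_lt_of_dist_lt (z 0) eta ltac:(lra) Hz0).
    destruct (lyap_along_solution z Hz ltac:(lra)) as [_ Hdecay].
    destruct (Hdecay (eps ^ 2 / (4 * cs_const + 1))) as [T HT]; [apply Rdiv_lt_0_compat; nra|].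
    exists (Rmax T 0). intros t Ht. pose proof (Rmax_l T 0). pose proof (Rmax_r T 0).
    apply dist_lt_of_lyap_lt; auto; [apply Hz; lra | apply HT; lra].
Qed.

End Stability.

Lemma harmonic_cv a : 0 <= a -> Un_cv (fun k => a / (INR k + 1)) 0.
Proof.
  intros Ha eps Heps. destruct (archimed_cor1 (eps / (a + 1))) as [K [HK HK0]].
  { apply Rdiv_lt_0_compat; lra. }
  exists K. intros k Hk. unfold R_dist. rewrite Rminus_0_r.
  pose proof (pos_INR k). assert (HKk : INR K <= INR k) by (apply le_INR; auto).
  assert (0 < INR K) by (apply lt_0_INR; auto).
  rewrite Rabs_pos_eq by (apply Rmult_le_pos; [lra | left; apply Rinv_0_lt_compat; lra]).
  apply Rle_lt_trans with ((a + 1) * / INR K).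
  - unfold Rdiv. apply Rmult_le_compat; [lra | left; apply Rinv_0_lt_compat; lra | lra |].
    apply Rinv_le_contravar; lra.
  - apply Rmult_lt_compat_l with (r := a + 1) in HK; [|lra].
    replace ((a + 1) * (eps / (a + 1))) with eps in HK by (field; lra). auto.
Qed.

Lemma seq_cv_of_rate (x : nat -> pt) e (Ms : nat -> R) C : 0 <= C -> Un_cv Ms 0 ->
  (forall k, dist N n (x k) e <= C * Ms k) -> seq_cv N n x e.
Proof.
  intros HC Hcv Hx eps Heps. destruct (Hcv (eps / (C + 1))) as [K HK]; [apply Rdiv_lt_0_compat; lra|].
  exists K. intros k Hk. specialize (HK k Hk). unfold R_dist in HK. rewrite Rminus_0_r in HK.
  pose proof (Rle_abs (Ms k)). pose proof (Hx k).
  apply Rle_lt_trans with (C * (eps / (C + 1))).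
  { assert (C * Rabs (Ms k) <= C * (eps / (C + 1))) by (apply Rmult_le_compat_l; lra). nra. }
  replace (C * (eps / (C + 1))) with (eps - eps / (C + 1)) by (field; lra).
  assert (0 < eps / (C + 1)) by (apply Rdiv_lt_0_compat; lra). lra.
Qed.

Lemma prefix_lower_bound (Ms : nat -> R) K : (forall k, 0 < Ms k) ->
  exists m, 0 < m /\ forall k, (k < K)%nat -> m <= Ms k.
Proof.
  intros HM. induction K as [|K [m [Hm H]]]; [exists 1; split; [lra | intros; lia]|].
  exists (Rmin m (Ms K)). split; [apply Rmin_pos; auto|].
  intros k Hk. destruct (Nat.eq_dec k K) as [->|]; [apply Rmin_r|].
  eapply Rle_trans; [apply Rmin_l | apply H; lia].
Qed.

(** The uniform distribution on each population is an interior point. *)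
Lemma int_Delta_nonempty x : in_Delta N n x -> exists c, in_int_Delta N n c.
Proof.
  intros [HxD _].
  assert (Hn : forall i, (i < N)%nat -> 0 < INR (n i)).
  { intros i Hi. destruct (HxD i Hi) as [_ [_ Hs]]. apply lt_0_INR.
    destruct (n i); [simpl in Hs; lra | lia]. }
  set (c := fun i h => if Nat.ltb i N then if Nat.ltb h (n i) then / INR (n i) else 0 else 0).
  assert (Hc : forall i h, inS N n i h -> c i h = / INR (n i)).
  { intros i h [Hi Hh]. unfold c. apply Nat.ltb_lt in Hi, Hh. rewrite Hi, Hh. auto. }
  exists c. split; [split|].
  - intros i Hi. split; [|split].
    + intros h Hh. rewrite Hc by (split; auto). left; apply Rinv_0_lt_compat; auto.
    + intros h Hh. unfold c. rewrite (proj2 (Nat.ltb_lt _ _) Hi).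
      destruct (Nat.ltb_spec h (n i)); [lia|auto].
    + rewrite (rsum_ext _ _ (fun _ => / INR (n i))) by (intros; apply Hc; split; auto).
      rewrite rsum_const. field. specialize (Hn i Hi); lra.
  - intros i h Hi. unfold c. destruct (Nat.ltb_spec i N); [lia|auto].
  - intros i h Hs. rewrite Hc by auto. apply Rinv_0_lt_compat, Hn. apply Hs.
Qed.

(** A point of [Delta] whose singleton has the mutation property is a mutation
    limit: singletons are connected and compact, and the only proper subset,
    the empty set, fails the mutation property as interior points exist. *)
Lemma singleton_mutation_limit x : in_Delta N n x -> has_mut_property N n f (fun y => y = x) ->
  mutation_limit N n f (fun y => y = x).
Proof.
  intros Hx Hmut. split; [exists x; auto|]. split; [intros y ->; auto|].
  split; [|split; [|split; auto]].
  - intros [U [V [_ [_ [_ [[x1 [-> HU]] [[x2 [-> HV]] Hdis]]]]]]]. apply (Hdis x eq_refl); auto.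
  - intros F HF Hcov. destruct (Hcov x eq_refl) as [U [HFU HUx]]. exists (cons U nil). split.
    + intros U' [<-|[]]; auto.
    + intros y ->. exists U. simpl; auto.
  - intros Y HY [x0 [-> HnY]] _ _ HmY.
    destruct (int_Delta_nonempty x Hx) as [c Hc].
    destruct (HmY c Hc) as [Ms [xk [y [_ [HYy _]]]]].
    pose proof (HY y HYy). subst y. contradiction.
Qed.

Lemma strict_vertex_mut_property e b r kap L : strict_vertex_estimates e b r kap L ->
  has_mut_property N n f (fun y => y = e).
Proof.
  intros Hest c Hc.
  destruct (mutation_equilibria_near_vertex e b r kap L c Hest Hc) as [M0 [C [HM0 [HC Hex]]]].
  set (Ms := fun k : nat => M0 / (INR k + 1)).
  assert (HMs : forall k, 0 < Ms k <= M0).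
  { intros k. unfold Ms. pose proof (pos_INR k). split; [apply Rdiv_lt_0_compat; lra|].
    unfold Rdiv. rewrite <- (Rmult_1_r M0) at 2. apply Rmult_le_compat_l; [lra|].
    rewrite <- Rinv_1. apply Rinv_le_contravar; lra. }
  destruct (functional_choice _ (fun k => Hex (Ms k) (HMs k))) as [xk Hxk].
  exists Ms, xk, e. split; [|split; auto].
  - split; [intros k; apply HMs|]. split; [apply harmonic_cv; lra|].
    split; intros k; apply Hxk.
  - apply (seq_cv_of_rate xk e Ms C); auto; [apply harmonic_cv; lra | intros k; apply Hxk].
Qed.

(** Mutation equilibria converging to a strict vertex are eventually within
    [stab_radius], hence asymptotically stable once the rate is small. *)
Lemma strict_vertex_attracting e b r kap L : strict_vertex_estimates e b r kap L ->
  attracting N n f (fun y => y = e).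
Proof.
  intros Hest c Hc Ms xk [HMpos [_ [HxD Hxphi]]] [y [-> Hcv]].
  pose proof Hest as [Hv [Hr [Hk [HL [Hlip Hneg]]]]].
  destruct (Hcv (stab_radius r kap L) (stab_radius_pos r kap L Hr Hk HL)) as [K HK].
  destruct (prefix_lower_bound Ms K HMpos) as [m [Hm HmK]].
  exists m. split; auto. intros k Hkm.
  assert (HkK : (K <= k)%nat) by (destruct (Nat.lt_ge_cases k K) as [Hlt|]; [specialize (HmK k Hlt); lra | auto]).
  apply (rest_point_asympt_stable e b r kap L); auto.
Qed.

End Fitness.

End Simplex.

Theorem mainTheorem10 (N : nat) (n : nat -> nat) (f : nat -> nat -> pt -> R)
  (Hf : fitness_hyp N n f) (xs : pt) (Hxs : strict_nash N n f xs) :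
  mutation_limit N n f (fun y => y = xs) /\
  attracting N n f (fun y => y = xs).
Proof.
  destruct (strict_nash_estimates N n f xs Hf Hxs) as [b [r [kap [L Hest]]]].
  split.
  - apply singleton_mutation_limit; [apply Hxs|].
    apply (strict_vertex_mut_property N n f xs b r kap L Hest).
  - apply (strict_vertex_attracting N n f xs b r kap L Hest).
Qed.
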